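(* Let $a\in\mathbb{R}$, $b\in(a,\infty)$, $h\in\mathbb{N}$, $v_1,\dots,v_h,w_1,\dots,w_h\in(0,\infty)$, and let $f,p\in C(\mathbb{R},\mathbb{R})$ satisfy for all $x\in\mathbb{R}$ that $p(x)\ge0$ and $p^{-1}((0,\infty))=(a,b)$; with $\mathcal{N}^\theta$, $\mathcal{L}$, $I_i^\theta$, $\psi_i$, $\operatorname{Lip}$ as in the context. Assume that $f$ is non-decreasing and satisfies $\operatorname{Lip}(f)<\min_{i\in\{1,\dots,h\}}v_iw_i$, let $\Theta\in C([0,\infty),\mathbb{R}^{h+1})$ satisfy for all $t\in[0,\infty)$ that $\Theta_t=\Theta_0-\int_0^t(\nabla\mathcal{L})(\Theta_s)\,\mathrm{d}s$, let $\vartheta\in\mathbb{R}^{h+1}$ satisfy $\limsup_{t\to\infty}\|\Theta_t-\vartheta\|=0$, let $V=\sup_{x\in(a,b)}\sum_{i\in\{1,\dots,h\},\,x\in I_i^\vartheta}v_i$, assume $$V<\Big[\int_a^bp(x)\,\mathrm{d}x\Big]^{-1}\min\Big\{\int_a^b(f(b)-f(x))p(x)\,\mathrm{d}x,\int_a^b(f(x)-f(a))p(x)\,\mathrm{d}x\Big\},$$ and assume $\sum_{i=1}^hv_i\mathbb{1}_{(a-[w_i]^{-1},b)}(\psi_i(\Theta_0))>f(b)-f(a)+4V$. Then $$\mathcal{L}(\vartheta)\le\big(2V^2+(f(b)-f(a))V\big)\int_a^bp(x)\,\mathrm{d}x.$$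
   Context: Let $\mathfrak{c}(x)=\min\{\max\{x,0\},1\}$ (clipping function). For $F\in C(\mathbb{R},\mathbb{R})$ let $\operatorname{Lip}(F)=\sup_{x,y\in[a,b],x\neq y}\frac{|F(x)-F(y)|}{|x-y|}$. For $\theta=(\theta_1,\dots,\theta_{h+1})\in\mathbb{R}^{h+1}$ and $i\in\{1,\dots,h\}$ let $\psi_i(\theta)=-[w_i]^{-1}\theta_i$, let $I_i^\theta=(\psi_i(\theta),\psi_i(\theta)+[w_i]^{-1})\cap(a,b)$, let $\mathcal{N}^\theta(x)=\theta_{h+1}+\sum_{i=1}^hv_i\mathfrak{c}(w_ix+\theta_i)$ for $x\in\mathbb{R}$, and let $\mathcal{L}(\theta)=\int_a^b(\mathcal{N}^\theta(x)-f(x))^2p(x)\,\mathrm{d}x$. ($\mathcal{L}$ is continuously differentiable, so $\nabla\mathcal{L}$ is the usual gradient.) $\|\cdot\|$ is the Euclidean norm and $\mathbb{1}_A$ the indicator function. *)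

From Stdlib Require Import Reals Lra List.
From Coquelicot Require Import Coquelicot.
Import ListNotations.
Open Scope R_scope.

Definition sum1 (n : nat) (F : nat -> R) : R :=
  fold_right Rplus 0 (map F (seq 1 n)).

Definition clip (x : R) : R := Rmin (Rmax x 0) 1.

Definition Lip (F : R -> R) (a b : R) : Rbar :=
  Lub_Rbar (fun r => exists x y, a <= x <= b /\ a <= y <= b /\ x <> y /\
                       r = Rabs (F x - F y) / Rabs (x - y)).

(* Parameters theta = (theta_1, ..., theta_{h+1}) are encoded as nat -> R,
   only the indices 1..h+1 being relevant. *)
Definition psi (w : nat -> R) (theta : nat -> R) (i : nat) : R :=
  - / (w i) * theta i.

Definition NN (h : nat) (v w : nat -> R) (theta : nat -> R) (x : R) : R :=
  theta (S h) + sum1 h (fun i => v i * clip (w i * x + theta i)).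

Definition Loss (a b : R) (h : nat) (v w : nat -> R) (f p : R -> R)
  (theta : nat -> R) : R :=
  RInt (fun x => (NN h v w theta x - f x) ^ 2 * p x) a b.

Definition upd (theta : nat -> R) (j : nat) (s : R) : nat -> R :=
  fun k => if Nat.eqb k j then s else theta k.

(* j-th component of the gradient of L (L is continuously differentiable). *)
Definition gradLoss (a b : R) (h : nat) (v w : nat -> R) (f p : R -> R)
  (theta : nat -> R) (j : nat) : R :=
  Derive (fun s => Loss a b h v w f p (upd theta j s)) (theta j).

Definition dist_h (h : nat) (theta theta' : nat -> R) : R :=
  sqrt (sum1 (S h) (fun j => (theta j - theta' j) ^ 2)).

Definition min_vw (h : nat) (v w : nat -> R) : R :=
  fold_right Rmin (v 1%nat * w 1%nat) (map (fun i => v i * w i) (seq 1 h)).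

Definition ind_open (l u x : R) : R :=
  if Rlt_dec l x then (if Rlt_dec x u then 1 else 0) else 0.

(* V = sup_{x in (a,b)} sum_{i in {1..h}, x in I_i^theta} v_i
   (x in I_i^theta expressed by indicators of the two open intervals) *)
Definition Vsup (a b : R) (h : nat) (v w : nat -> R) (theta : nat -> R) : R :=
  real (Lub_Rbar (fun r => exists x, a < x < b /\
     r = sum1 h (fun i => v i * (ind_open (psi w theta i) (psi w theta i + / (w i)) x
                                 * ind_open a b x)))).

From Stdlib Require Import Reals List Lra Lia Classical.
From Coquelicot Require Import Coquelicot.
Open Scope R_scope.

(** Let [E = N^vartheta - f].  Since [Theta] converges, [vartheta] is a critical
    point of the loss, i.e. [E p] has integral zero over [(a, b)] and over the
    window [I_i] of every neuron.  On a window [N] has slope at least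
    [v_i w_i > Lip f], so [E] is strictly increasing there and changes sign.
    Walking left from a point where [E > 0] to the last point where [E <= 0],
    every neuron active on the way is still active at the end, hence [N] rises
    by at most [V]; so [E <= A := V + max(0, E a - V)] on [(a, b)], and
    symmetrically [E >= - B := - V - max(0, - E b - V)].  The two maxima cannot
    both be positive: otherwise no window straddles [a] or [b], and along the
    flow the position [psi_i] of every neuron starting in [(a - 1/w_i, b)] is
    kept away from the ends of that interval, where its window is short and
    the gradient pushes it back inside; then all these neurons lie within
    [[a, b]] at the limit and make [N b - N a > f b - f a + 4 V], which
    contradicts [E a > V >= 0 > - V > E b].  Integrating [(E - A) (E + B) <= 0]
    against [p] and using [int E p = 0] yields [Loss <= A B int p], and
    [A B <= V^2 + V (f b - f a)]. *)

Lemma continuous_eps_delta (f : R -> R) (x : R) :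
  continuous f x <->
  forall eps, 0 < eps -> exists d, 0 < d /\
    forall y, Rabs (y - x) < d -> Rabs (f y - f x) < eps.
Proof.
  unfold continuous. rewrite filterlim_locally. split.
  - intros H eps He. destruct (H (mkposreal eps He)) as [d Hd].
    exists d. split; [apply cond_pos|]. intros y Hy. apply Hd, Hy.
  - intros H eps. destruct (H eps (cond_pos eps)) as [d [Hd Hy]].
    exists (mkposreal d Hd). intros y Hb. apply Hy, Hb.
Qed.

Lemma continuous_lipschitz (g : R -> R) (L x : R) :
  (forall y, Rabs (g y - g x) <= L * Rabs (y - x)) -> continuous g x.
Proof.
  intros H. apply continuous_eps_delta. intros eps He.
  pose proof (Rabs_pos L). pose proof (Rle_abs L).
  exists (eps / (Rabs L + 1)). split; [apply Rdiv_lt_0_compat; lra|].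
  intros y Hy. pose proof (Rabs_pos (y - x)). specialize (H y).
  apply Rmult_lt_compat_l with (r := Rabs L + 1) in Hy; [|lra].
  replace ((Rabs L + 1) * (eps / (Rabs L + 1))) with eps in Hy by (field; lra).
  nra.
Qed.

Lemma Rmax_0_lipschitz (y y' : R) : Rabs (Rmax 0 y - Rmax 0 y') <= Rabs (y - y').
Proof.
  apply Rabs_le. pose proof (Rle_abs (y - y')). pose proof (Rle_abs (- (y - y'))).
  rewrite Rabs_Ropp in *. unfold Rmax. repeat destruct Rle_dec; split; lra.
Qed.

Lemma continuous_Rmax_0_affine (w k x : R) : continuous (fun y => Rmax 0 (w * y + k)) x.
Proof.
  apply continuous_lipschitz with (Rabs w). intros y.
  rewrite <- Rabs_mult. eapply Rle_trans; [apply Rmax_0_lipschitz|]. right; f_equal; ring.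
Qed.

(** Continuity and integrals of real functions, specialised from Coquelicot's
    normed-module statements so that they can be used with [apply]/[rewrite]. *)

Lemma continuous_plus_R (f g : R -> R) x :
  continuous f x -> continuous g x -> continuous (fun y => f y + g y) x.
Proof. apply (continuous_plus f g). Qed.
Lemma continuous_minus_R (f g : R -> R) x :
  continuous f x -> continuous g x -> continuous (fun y => f y - g y) x.
Proof. apply (continuous_minus f g). Qed.
Lemma continuous_mult_R (f g : R -> R) x :
  continuous f x -> continuous g x -> continuous (fun y => f y * g y) x.
Proof. apply (continuous_mult f g). Qed.
Lemma continuous_opp_R (f : R -> R) x : continuous f x -> continuous (fun y => - f y) x.
Proof. apply (continuous_opp f). Qed.
Lemma continuous_const_R (c x : R) : continuous (fun _ : R => c) x.
Proof. apply continuous_const. Qed.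
Lemma continuous_pow2_R (f : R -> R) x : continuous f x -> continuous (fun y => f y ^ 2) x.
Proof.
  intros. apply continuous_ext with (fun y => f y * f y); [intros; simpl; ring|].
  apply continuous_mult_R; auto.
Qed.

Create HintDb cont.
#[export] Hint Resolve continuous_plus_R continuous_minus_R continuous_mult_R
  continuous_opp_R continuous_const_R continuous_pow2_R continuous_Rmax_0_affine : cont.

Lemma ex_RInt_R (f : R -> R) a b : (forall x, continuous f x) -> ex_RInt f a b.
Proof. intros H. apply (ex_RInt_continuous (V := R_CompleteNormedModule)). intros; apply H. Qed.
#[export] Hint Resolve ex_RInt_R : cont.

Lemma RInt_ext_R (f g : R -> R) a b :
  (forall x, Rmin a b < x < Rmax a b -> f x = g x) -> RInt f a b = RInt g a b.
Proof. apply RInt_ext. Qed.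
Lemma RInt_plus_R (f g : R -> R) a b : ex_RInt f a b -> ex_RInt g a b ->
  RInt (fun x => f x + g x) a b = RInt f a b + RInt g a b.
Proof. apply (RInt_plus f g). Qed.
Lemma RInt_minus_R (f g : R -> R) a b : ex_RInt f a b -> ex_RInt g a b ->
  RInt (fun x => f x - g x) a b = RInt f a b - RInt g a b.
Proof. apply (RInt_minus f g). Qed.
Lemma RInt_scal_R (f : R -> R) a b c : ex_RInt f a b ->
  RInt (fun x => c * f x) a b = c * RInt f a b.
Proof. apply (RInt_scal f). Qed.
Lemma RInt_const_R a b c : RInt (fun _ => c) a b = (b - a) * c.
Proof. rewrite RInt_const. reflexivity. Qed.
Lemma RInt_Chasles_R (f : R -> R) a b c : ex_RInt f a b -> ex_RInt f b c ->
  RInt f a b + RInt f b c = RInt f a c.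
Proof. apply (RInt_Chasles (V := R_CompleteNormedModule) f). Qed.
Lemma RInt_swap_R (f : R -> R) a b : ex_RInt f a b -> RInt f b a = - RInt f a b.
Proof. intros H. rewrite <- (opp_RInt_swap f a b H). reflexivity. Qed.

Lemma RInt_le_R (f g : R -> R) a b : a <= b ->
  (forall x, continuous f x) -> (forall x, continuous g x) ->
  (forall x, a < x < b -> f x <= g x) -> RInt f a b <= RInt g a b.
Proof. intros. apply RInt_le; auto with cont. Qed.

Lemma RInt_ge_const (G : R -> R) T t c : T <= t -> (forall x, continuous G x) ->
  (forall s, T < s < t -> c <= G s) -> (t - T) * c <= RInt G T t.
Proof. intros. rewrite <- RInt_const_R. apply RInt_le_R; auto with cont. Qed.

Lemma RInt_le_const (G : R -> R) T t c : T <= t -> (forall x, continuous G x) ->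
  (forall s, T < s < t -> G s <= c) -> RInt G T t <= (t - T) * c.
Proof. intros. rewrite <- RInt_const_R. apply RInt_le_R; auto with cont. Qed.

Lemma abs_RInt_le_fun (f g : R -> R) a b : a <= b -> ex_RInt f a b -> ex_RInt g a b ->
  (forall x, a < x < b -> Rabs (f x) <= g x) -> Rabs (RInt f a b) <= RInt g a b.
Proof.
  intros Hab Hf Hg H. apply Rabs_le. split.
  - assert (RInt (fun x => -1 * g x) a b <= RInt f a b).
    { apply RInt_le; auto. apply (ex_RInt_scal (V := R_NormedModule)), Hg.
      intros x Hx. specialize (H x Hx). pose proof (Rle_abs (- f x)).
      rewrite Rabs_Ropp in *. lra. }
    rewrite RInt_scal_R in H0 by auto. lra.
  - apply RInt_le; auto. intros x Hx. specialize (H x Hx). pose proof (Rle_abs (f x)). lra.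
Qed.

Lemma abs_RInt_le_const_R (f : R -> R) a b M : (forall x, continuous f x) ->
  (forall x, Rmin a b <= x <= Rmax a b -> Rabs (f x) <= M) ->
  Rabs (RInt f a b) <= Rabs (b - a) * M.
Proof.
  intros Hc HM. destruct (Rle_dec a b).
  - rewrite (Rabs_pos_eq (b - a)) by lra. apply abs_RInt_le_const; auto with cont.
    intros; apply HM. rewrite Rmin_left, Rmax_right; lra.
  - rewrite RInt_swap_R, Rabs_Ropp, (Rabs_left (b - a)) by (auto with cont; lra).
    replace (- (b - a)) with (a - b) by ring.
    apply abs_RInt_le_const; auto with cont; [lra|].
    intros; apply HM. rewrite Rmin_right, Rmax_left; lra.
Qed.

Lemma continuous_bounded_on (g : R -> R) (a b : R) : a <= b -> (forall x, continuous g x) ->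
  exists M, 0 <= M /\ forall x, a <= x <= b -> Rabs (g x) <= M.
Proof.
  intros Hab Hc. destruct (continuity_ab_maj (fun x => Rabs (g x)) a b Hab) as [m [Hm _]].
  - intros c _. apply continuity_pt_filterlim, continuous_Rabs_comp, Hc.
  - exists (Rabs (g m)). split; [apply Rabs_pos | auto].
Qed.

Lemma Rabs_mult_le x y X Y : Rabs x <= X -> Rabs y <= Y -> Rabs (x * y) <= X * Y.
Proof. intros. rewrite Rabs_mult. apply Rmult_le_compat; auto; apply Rabs_pos. Qed.

Lemma finite_common_radius (l : list nat) (P : nat -> R -> Prop) :
  (forall k e e', 0 < e' <= e -> P k e -> P k e') ->
  (forall k, In k l -> exists e, 0 < e /\ P k e) -> exists e, 0 < e /\ forall k, In k l -> P k e.
Proof.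
  intros Hmono. induction l as [|x l IH]; intros H.
  - exists 1. split; [lra | intros k []].
  - destruct (H x) as [e1 [He1 P1]]; [simpl; auto|].
    destruct IH as [e2 [He2 P2]]; [intros; apply H; simpl; auto|].
    pose proof (Rmin_l e1 e2). pose proof (Rmin_r e1 e2). pose proof (Rmin_glb_lt _ _ _ He1 He2).
    exists (Rmin e1 e2). split; auto.
    intros k [<- | Hk]; [apply Hmono with e1 | apply Hmono with e2]; auto; lra.
Qed.

Lemma RInt_weighted_sign_change (g p : R -> R) l r : l < r ->
  (forall x, continuous g x) -> (forall x, continuous p x) ->
  (forall x, l < x < r -> 0 < p x) -> RInt (fun x => g x * p x) l r = 0 ->
  (exists q, l < q < r /\ g q <= 0) /\ (exists q, l < q < r /\ 0 <= g q).
Proof.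
  intros Hlr Hg Hp Hpos H0. split; apply NNPP; intros Hno.
  - assert (0 < RInt (fun x => g x * p x) l r); [|lra].
    apply RInt_gt_0; auto with cont. intros x Hx. apply Rmult_lt_0_compat; auto.
    apply Rnot_le_lt. intros Hgx. apply Hno. exists x. auto.
  - assert (0 < RInt (fun x => - 1 * (g x * p x)) l r).
    { apply RInt_gt_0; auto with cont. intros x Hx.
      assert (g x < 0) by (apply Rnot_le_lt; intros Hgx; apply Hno; exists x; auto).
      specialize (Hpos x Hx). nra. }
    rewrite RInt_scal_R in H by auto with cont. lra.
Qed.

Lemma is_derive_quadratic_error (F : R -> R) x l K r : 0 < r ->
  (forall d, d <> 0 -> Rabs d < r -> Rabs (F (x + d) - F x - d * l) <= K * d ^ 2) ->
  is_derive F x l.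
Proof.
  intros Hr H. apply is_derive_Reals. intros eps He.
  pose proof (Rabs_pos K). pose proof (Rle_abs K).
  assert (HK1 : 0 < eps / (Rabs K + 1)) by (apply Rdiv_lt_0_compat; lra).
  exists (mkposreal (Rmin r (eps / (Rabs K + 1))) (Rmin_glb_lt _ _ _ Hr HK1)).
  intros d Hd Hdl. simpl in Hdl.
  pose proof (Rmin_l r (eps / (Rabs K + 1))). pose proof (Rmin_r r (eps / (Rabs K + 1))).
  specialize (H d Hd ltac:(lra)).
  assert (Hd0 : 0 < Rabs d) by (apply Rabs_pos_lt; auto).
  replace ((F (x + d) - F x) / d - l) with ((F (x + d) - F x - d * l) / d) by (field; auto).
  unfold Rdiv. rewrite Rabs_mult, Rabs_inv.
  replace (d ^ 2) with (Rabs d * Rabs d) in H by (rewrite <- Rsqr_pow2, Rsqr_abs; reflexivity).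
  apply Rle_lt_trans with (K * Rabs d).
  - apply Rmult_le_reg_r with (Rabs d); [lra|].
    rewrite Rmult_assoc, Rinv_l by lra. lra.
  - assert (Hd2 : (Rabs K + 1) * Rabs d < eps).
    { replace eps with ((Rabs K + 1) * (eps / (Rabs K + 1))) by (field; lra).
      apply Rmult_lt_compat_l; lra. }
    nra.
Qed.

Definition ramp_primitive (y : R) : R := Rmax 0 y ^ 2 / 2.

Lemma ramp_primitive_le (y c : R) : y <= Rabs c -> ramp_primitive y <= c ^ 2 / 2.
Proof.
  intros Hy. unfold ramp_primitive. pose proof (Rabs_pos c).
  assert (0 <= Rmax 0 y <= Rabs c) by (split; [apply Rmax_l | apply Rmax_lub; lra]).
  rewrite <- (Rabs_pos_eq (c ^ 2)), <- RPow_abs by apply pow2_ge_0. nra.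
Qed.

Lemma ramp_primitive_taylor (y e : R) :
  Rabs (ramp_primitive (y + e) - ramp_primitive y - e * Rmax 0 y) <= e ^ 2 / 2.
Proof. unfold ramp_primitive. apply Rabs_le. unfold Rmax. repeat destruct Rle_dec; split; nra. Qed.

Lemma is_derive_ramp_primitive (w k x : R) : w <> 0 ->
  is_derive (fun x => ramp_primitive (w * x + k) / w) x (Rmax 0 (w * x + k)).
Proof.
  intros Hw. assert (0 < Rabs w) by (apply Rabs_pos_lt; auto).
  apply is_derive_quadratic_error with (K := Rabs w / 2) (r := 1); [lra|].
  intros d _ _. set (y := w * x + k).
  replace (w * (x + d) + k) with (y + w * d) by (unfold y; ring).
  replace (ramp_primitive (y + w * d) / w - ramp_primitive y / w - d * Rmax 0 y)
    with ((ramp_primitive (y + w * d) - ramp_primitive y - (w * d) * Rmax 0 y) / w)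
    by (field; auto).
  unfold Rdiv. rewrite Rabs_mult, Rabs_inv.
  apply Rmult_le_reg_r with (Rabs w); [lra|].
  rewrite Rmult_assoc, Rinv_l, Rmult_1_r by lra.
  eapply Rle_trans; [apply ramp_primitive_taylor|]. right.
  rewrite <- !Rsqr_pow2, Rsqr_mult, (Rsqr_abs w). unfold Rsqr. field.
Qed.

Lemma RInt_Rmax_0_affine (w k l r : R) : w <> 0 ->
  RInt (fun x => Rmax 0 (w * x + k)) l r
  = (ramp_primitive (w * r + k) - ramp_primitive (w * l + k)) / w.
Proof.
  intros Hw. apply is_RInt_unique.
  replace ((ramp_primitive (w * r + k) - ramp_primitive (w * l + k)) / w)
    with (minus (ramp_primitive (w * r + k) / w) (ramp_primitive (w * l + k) / w))
    by (unfold minus, plus, opp; simpl; field; auto).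
  apply (is_RInt_derive (fun x => ramp_primitive (w * x + k) / w)).
  - intros; apply is_derive_ramp_primitive; auto.
  - intros; apply continuous_Rmax_0_affine.
Qed.

Lemma RInt_ramp_up_le (w k l r d : R) : 0 < w -> l <= r -> (l = r \/ w * r + k <= 0) ->
  RInt (fun x => Rmax 0 (w * x + (k + d))) l r <= d ^ 2 / (2 * w).
Proof.
  intros Hw Hlr Hc. rewrite RInt_Rmax_0_affine by lra.
  replace (d ^ 2 / (2 * w)) with ((d ^ 2 / 2) / w) by (field; lra).
  apply Rmult_le_compat_r; [left; apply Rinv_0_lt_compat; lra|].
  unfold ramp_primitive at 2. pose proof (pow2_ge_0 (Rmax 0 (w * l + (k + d)))).
  destruct Hc as [<- | Hc].
  - unfold ramp_primitive. pose proof (pow2_ge_0 d). lra.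
  - pose proof (Rle_abs d). pose proof (ramp_primitive_le (w * r + (k + d)) d). lra.
Qed.

Lemma RInt_ramp_down_le (w k l r d : R) : 0 < w -> l <= r -> (l = r \/ 0 <= w * l + k) ->
  RInt (fun x => Rmax 0 ((- w) * x + (- (k + d)))) l r <= d ^ 2 / (2 * w).
Proof.
  intros Hw Hlr Hc. rewrite RInt_Rmax_0_affine by lra.
  replace (d ^ 2 / (2 * w)) with ((d ^ 2 / 2) / w) by (field; lra).
  replace ((ramp_primitive (- w * r + - (k + d)) - ramp_primitive (- w * l + - (k + d))) / - w)
    with ((ramp_primitive (- w * l + - (k + d)) - ramp_primitive (- w * r + - (k + d))) / w)
    by (field; lra).
  apply Rmult_le_compat_r; [left; apply Rinv_0_lt_compat; lra|].
  unfold ramp_primitive at 2. pose proof (pow2_ge_0 (Rmax 0 (- w * r + - (k + d)))).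
  destruct Hc as [<- | Hc].
  - unfold ramp_primitive. pose proof (pow2_ge_0 d). lra.
  - pose proof (Rle_abs (- d)). rewrite Rabs_Ropp in *.
    pose proof (ramp_primitive_le (- w * l + - (k + d)) d). lra.
Qed.

Lemma first_nonpos_point (g : R -> R) lo hi : (forall x, continuous g x) -> lo < hi ->
  0 < g lo ->
  exists m, lo < m <= hi /\ (m = hi \/ g m <= 0) /\ forall s, lo <= s < m -> 0 < g s.
Proof.
  intros Hc Hlh Hlo.
  set (E := fun t => lo <= t <= hi /\ forall s, lo <= s <= t -> 0 < g s).
  assert (Elo : E lo) by (split; [lra | intros s Hs; replace s with lo by lra; auto]).
  destruct (completeness E) as [m [Hub Hlub]].
  { exists hi. intros t [Ht _]. lra. }
  { exists lo. exact Elo. }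
  assert (Hlm : lo <= m) by (apply Hub, Elo).
  assert (Hmh : m <= hi) by (apply Hlub; intros t [Ht _]; lra).
  assert (Hbelow : forall s, lo <= s < m -> 0 < g s).
  { intros s Hs. apply NNPP. intros Hgs.
    assert (m <= s); [|lra]. apply Hlub. intros t [_ Ht].
    apply Rnot_lt_le. intros Hst. apply Hgs, Ht. lra. }
  exists m. destruct (Rle_dec (g m) 0) as [Hgm | Hgm].
  - assert (m <> lo) by (intros ->; lra). repeat split; auto; lra.
  - destruct (Req_dec m hi) as [-> | Hmh']; [repeat split; auto; lra|].
    exfalso. apply Rnot_le_lt in Hgm.
    destruct (proj1 (continuous_eps_delta g m) (Hc m) (g m) Hgm) as [eta [Heta Hn]].
    set (t := Rmin (m + eta / 2) hi).
    assert (m < t) by (apply Rmin_glb_lt; lra).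
    assert (t <= m); [|lra]. apply Hub. split; [unfold t; split; [apply Rmin_glb|apply Rmin_r]; lra|].
    intros s Hs. destruct (Rlt_dec s m); [apply Hbelow; lra|].
    assert (Rabs (g s - g m) < g m); [|pose proof (Rle_abs (- (g s - g m))); rewrite Rabs_Ropp in *; lra].
    apply Hn. unfold t in Hs. pose proof (Rmin_l (m + eta / 2) hi). rewrite Rabs_pos_eq; lra.
Qed.

(** Gronwall-type argument: just before the first zero of [y], the bound
    [|y'| <= K y] allows [y] to lose at most half of its recent maximum. *)
Lemma positive_persists (y k : R -> R) :
  (forall x, continuous y x) -> (forall x, continuous k x) -> 0 < y 0 ->
  (forall t, 0 <= t -> y t = y 0 + RInt k 0 t) ->
  (forall t, 0 <= t -> exists eta K, 0 < eta /\ 0 <= K /\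
     forall s, 0 <= s -> Rabs (s - t) < eta -> Rabs (k s) <= K * Rmax 0 (y s)) ->
  forall t, 0 <= t -> 0 < y t.
Proof.
  intros Hy Hk Hy0 Heq Hloc t1 Ht1. apply Rnot_le_lt. intros Hn.
  assert (Ht1' : 0 < t1) by (destruct (Req_dec t1 0) as [-> |]; lra).
  destruct (first_nonpos_point y 0 t1 Hy Ht1' Hy0) as [ts [Hts [Hyts Hpos]]].
  assert (Hyts' : y ts <= 0) by (destruct Hyts as [-> |]; auto).
  destruct (Hloc ts ltac:(lra)) as [eta [K [Heta [HK HkK]]]].
  set (dl := Rmin (Rmin (eta / 2) (ts / 2)) (1 / (2 * K + 2))).
  assert (Hdl : 0 < dl) by (unfold dl; repeat apply Rmin_glb_lt; try apply Rdiv_lt_0_compat; lra).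
  assert (Hdl1 : dl <= eta / 2 /\ dl <= ts / 2 /\ dl <= 1 / (2 * K + 2)).
  { unfold dl. pose proof (Rmin_l (Rmin (eta / 2) (ts / 2)) (1 / (2 * K + 2))).
    pose proof (Rmin_r (Rmin (eta / 2) (ts / 2)) (1 / (2 * K + 2))).
    pose proof (Rmin_l (eta / 2) (ts / 2)). pose proof (Rmin_r (eta / 2) (ts / 2)). lra. }
  destruct (continuity_ab_maj y (ts - dl) ts) as [tau [Htau1 Htau2]]; [lra| |].
  { intros c _. apply continuity_pt_filterlim, Hy. }
  set (m := y tau).
  assert (Hm : 0 < m) by (apply Rlt_le_trans with (y (ts - dl)); [apply Hpos; lra | apply Htau1; lra]).
  assert (Htl : tau < ts) by (destruct (Req_dec tau ts) as [E | E]; [unfold m in Hm; rewrite E in Hm |]; lra).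
  assert (HI : y ts - y tau = RInt k tau ts).
  { rewrite (Heq ts), (Heq tau) by lra.
    rewrite <- (RInt_Chasles_R k 0 tau ts) by auto with cont. ring. }
  assert (HR : (ts - tau) * (- (K * m)) <= RInt k tau ts).
  { apply RInt_ge_const; auto; [lra|]. intros s Hs.
    assert (Rabs (k s) <= K * Rmax 0 (y s)) by (apply HkK; [lra | rewrite Rabs_left1 by lra; lra]).
    assert (Rmax 0 (y s) <= m) by (apply Rmax_lub; [lra | apply Htau1; lra]).
    pose proof (Rle_abs (- k s)). rewrite Rabs_Ropp in *.
    pose proof (Rmult_le_compat_l K _ _ HK H0). lra. }
  assert ((ts - tau) * (K * m) <= m / 2); [|unfold m in *; lra].
  apply Rle_trans with ((1 / (2 * K + 2)) * ((K + 1) * m)).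
  - apply Rmult_le_compat; nra.
  - right. field. lra.
Qed.

Lemma is_lim_p_infty_eps (y : R -> R) (l : R) :
  is_lim y p_infty l <-> forall e, 0 < e -> exists T, forall t, T < t -> Rabs (y t - l) < e.
Proof.
  rewrite <- is_lim_spec. split.
  - intros H e He. exact (H (mkposreal e He)).
  - intros H e. exact (H e (cond_pos e)).
Qed.

(** Otherwise [z] would drift by an unbounded amount. *)
Lemma drift_limit_zero (z k : R -> R) (l kappa : R) :
  (forall x, continuous k x) ->
  (forall T t, 0 <= T -> 0 <= t -> z t - z T = - RInt k T t) ->
  is_lim z p_infty l -> is_lim k p_infty kappa -> kappa = 0.
Proof.
  rewrite !is_lim_p_infty_eps. intros Hk Hz Hzl Hkl.
  apply NNPP. intros Hne. assert (Ha : 0 < Rabs kappa) by (apply Rabs_pos_lt; auto).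
  destruct (Hzl 1 ltac:(lra)) as [T1 HT1].
  destruct (Hkl (Rabs kappa / 2) ltac:(lra)) as [T2 HT2].
  set (T := Rmax 0 (Rmax T1 T2) + 1). set (t := T + 4 / Rabs kappa).
  assert (HT : 0 <= T /\ T1 < T /\ T2 < T).
  { unfold T. pose proof (Rmax_l 0 (Rmax T1 T2)). pose proof (Rmax_r 0 (Rmax T1 T2)).
    pose proof (Rmax_l T1 T2). pose proof (Rmax_r T1 T2). lra. }
  assert (Htt : (t - T) * (Rabs kappa / 2) = 2) by (unfold t; field; lra).
  assert (Tt : T < t) by (unfold t; pose proof (Rdiv_lt_0_compat 4 _ ltac:(lra) Ha); lra).
  pose proof (HT1 t ltac:(lra)). pose proof (HT1 T ltac:(lra)).
  pose proof (Hz T t ltac:(lra) ltac:(lra)).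
  assert (Hks : forall s, T < s < t -> Rabs (k s - kappa) < Rabs kappa / 2) by (intros; apply HT2; lra).
  destruct (Rlt_dec 0 kappa) as [Hpos | Hneg].
  - rewrite (Rabs_pos_eq kappa) in * by lra.
    assert ((t - T) * (kappa / 2) <= RInt k T t).
    { apply RInt_ge_const; auto; [lra|]. intros s Hs. specialize (Hks s Hs).
      pose proof (Rle_abs (- (k s - kappa))). rewrite Rabs_Ropp in *. lra. }
    pose proof (Rle_abs (- (z t - l))). pose proof (Rle_abs (z T - l)). rewrite Rabs_Ropp in *. lra.
  - rewrite (Rabs_left kappa) in * by lra.
    assert (RInt k T t <= (t - T) * (kappa / 2)).
    { apply RInt_le_const; auto; [lra|]. intros s Hs. specialize (Hks s Hs).
      pose proof (Rle_abs (k s - kappa)). lra. }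
    pose proof (Rle_abs (z t - l)). pose proof (Rle_abs (- (z T - l))). rewrite Rabs_Ropp in *. lra.
Qed.

(** [y] never reaches [c] by [positive_persists], and late in time it cannot
    decrease while it is close to [c]; so it cannot converge to a point [<= c]. *)
Lemma limit_above_barrier (y k : R -> R) (c l : R) :
  (forall x, continuous y x) -> (forall x, continuous k x) ->
  (forall t, 0 <= t -> y t = y 0 + RInt k 0 t) -> c < y 0 ->
  (forall t, 0 <= t -> exists eta K, 0 < eta /\ 0 <= K /\
     forall s, 0 <= s -> Rabs (s - t) < eta -> Rabs (k s) <= K * Rmax 0 (y s - c)) ->
  (exists eps T, 0 < eps /\ forall t, T <= t -> y t < c + eps -> 0 <= k t) ->
  is_lim y p_infty l -> c < l.
Proof.
  intros Hy Hk Heq Hy0 Hloc [eps [T0 [Heps Hnear]]] Hl. rewrite is_lim_p_infty_eps in Hl.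
  assert (Habove : forall t, 0 <= t -> c < y t).
  { intros t Ht. cut (0 < y t - c); [lra|].
    apply (positive_persists (fun s => y s - c) k); auto with cont; [lra|].
    intros s Hs. rewrite Heq by auto. ring. }
  assert (Hincr : forall T t, 0 <= T -> T0 <= T -> T <= t ->
            (forall s, T <= s <= t -> y s < c + eps) -> y T <= y t).
  { intros T t HT HT0 Ht Hs.
    rewrite (Heq t), (Heq T) by lra. rewrite <- (RInt_Chasles_R k 0 T t) by auto with cont.
    cut (0 <= RInt k T t); [lra|]. rewrite <- (Rmult_0_r (t - T)).
    apply RInt_ge_const; auto. intros s Hs'. apply Hnear; [lra | apply Hs; lra]. }
  apply Rnot_le_lt. intros Hlc.
  destruct (Hl eps Heps) as [T1 HT1].
  set (T := Rmax 0 (Rmax T0 T1) + 1).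
  assert (HT : 0 <= T /\ T0 < T /\ T1 < T).
  { unfold T. pose proof (Rmax_l 0 (Rmax T0 T1)). pose proof (Rmax_r 0 (Rmax T0 T1)).
    pose proof (Rmax_l T0 T1). pose proof (Rmax_r T0 T1). lra. }
  pose proof (Habove T ltac:(lra)).
  destruct (Hl (y T - c) ltac:(lra)) as [T2 HT2].
  set (t := Rmax T T2 + 1).
  assert (T <= t /\ T2 < t) by (unfold t; pose proof (Rmax_l T T2); pose proof (Rmax_r T T2); lra).
  assert (y T <= y t).
  { apply Hincr; try lra. intros s Hs. specialize (HT1 s ltac:(lra)).
    pose proof (Rle_abs (y s - l)). lra. }
  specialize (HT2 t ltac:(lra)). pose proof (Rle_abs (y t - l)). lra.
Qed.

Lemma RInt_weighted_sq_le (E p : R -> R) a b A B : a <= b ->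
  (forall x, continuous E x) -> (forall x, continuous p x) -> (forall x, 0 <= p x) ->
  RInt (fun x => E x * p x) a b = 0 -> (forall x, a < x < b -> - B <= E x <= A) ->
  RInt (fun x => (E x) ^ 2 * p x) a b <= A * B * RInt p a b.
Proof.
  intros Hab HE Hp Hp0 H0 Hbd.
  apply Rle_trans with (RInt (fun x => (A - B) * (E x * p x) + A * B * p x) a b).
  - apply RInt_le_R; auto with cont. intros x Hx. specialize (Hbd x Hx). specialize (Hp0 x).
    assert (E x ^ 2 <= (A - B) * E x + A * B) by nra. nra.
  - rewrite RInt_plus_R, !RInt_scal_R, H0 by auto with cont. lra.
Qed.

Definition lsum (l : list nat) (F : nat -> R) : R := fold_right Rplus 0 (map F l).

Lemma sum1_lsum n F : sum1 n F = lsum (seq 1 n) F.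
Proof. reflexivity. Qed.

Lemma in_seq1 n i : In i (seq 1 n) <-> (1 <= i <= n)%nat.
Proof. rewrite in_seq. lia. Qed.

Lemma lsum_le (l : list nat) F G :
  (forall i, In i l -> F i <= G i) -> lsum l F <= lsum l G.
Proof.
  induction l as [|x l IH]; unfold lsum in *; simpl; intros H; [lra|].
  apply Rplus_le_compat; auto.
Qed.

Lemma lsum_minus (l : list nat) F G : lsum l (fun i => F i - G i) = lsum l F - lsum l G.
Proof. induction l as [|x l IH]; unfold lsum in *; simpl; [|rewrite IH]; ring. Qed.

Lemma lsum_scal (l : list nat) c F : lsum l (fun i => c * F i) = c * lsum l F.
Proof. induction l as [|x l IH]; unfold lsum in *; simpl; [|rewrite IH]; ring. Qed.

Lemma lsum_ext (l : list nat) F G : (forall i, In i l -> F i = G i) -> lsum l F = lsum l G.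
Proof.
  induction l as [|x l IH]; unfold lsum in *; simpl; intros H; [reflexivity|].
  rewrite H, IH; auto.
Qed.

Lemma lsum_abs (l : list nat) F : Rabs (lsum l F) <= lsum l (fun i => Rabs (F i)).
Proof.
  induction l as [|x l IH]; unfold lsum in *; simpl; [rewrite Rabs_R0; lra|].
  eapply Rle_trans; [apply Rabs_triang | lra].
Qed.

Lemma lsum_zero (l : list nat) F : (forall i, In i l -> F i = 0) -> lsum l F = 0.
Proof.
  induction l as [|x l IH]; unfold lsum in *; simpl; intros H; [reflexivity|].
  rewrite H, IH; auto. ring.
Qed.

Lemma lsum_nonneg (l : list nat) F : (forall i, In i l -> 0 <= F i) -> 0 <= lsum l F.
Proof.
  intros H. replace 0 with (lsum l (fun _ => 0)).
  - apply lsum_le, H.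
  - apply lsum_zero. auto.
Qed.

Lemma lsum_single (l : list nat) F j : NoDup l -> In j l ->
  (forall i, In i l -> i <> j -> F i = 0) -> lsum l F = F j.
Proof.
  induction l as [|x l IH]; intros Hnd Hin H; [contradiction|].
  inversion Hnd as [|? ? Hx Hnd']; subst. unfold lsum. simpl. fold (lsum l F).
  destruct Hin as [<- | Hin].
  - rewrite lsum_zero; [ring|]. intros i Hi. apply H; [simpl; auto|]. intros ->. contradiction.
  - rewrite (H x), IH; auto; [ring | |simpl; auto|]; [intros; apply H; simpl; auto|].
    intros ->. contradiction.
Qed.

Lemma lsum_ge_term (l : list nat) F j : In j l ->
  (forall i, In i l -> 0 <= F i) -> F j <= lsum l F.
Proof.
  induction l as [|x l IH]; intros Hin H; [contradiction|]. unfold lsum. simpl. fold (lsum l F).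
  assert (0 <= F x) by (apply H; simpl; auto).
  assert (0 <= lsum l F) by (apply lsum_nonneg; intros; apply H; simpl; auto).
  destruct Hin as [<- | Hin]; [lra|].
  assert (F j <= lsum l F) by (apply IH; auto; intros; apply H; simpl; auto). lra.
Qed.

Lemma clip_0 x : x <= 0 -> clip x = 0.
Proof. intros. unfold clip, Rmax, Rmin. repeat destruct Rle_dec; lra. Qed.
Lemma clip_1 x : 1 <= x -> clip x = 1.
Proof. intros. unfold clip, Rmax, Rmin. repeat destruct Rle_dec; lra. Qed.
Lemma clip_id x : 0 <= x <= 1 -> clip x = x.
Proof. intros. unfold clip, Rmax, Rmin. repeat destruct Rle_dec; lra. Qed.
Lemma clip_range x : 0 <= clip x <= 1.
Proof. unfold clip, Rmax, Rmin. repeat destruct Rle_dec; lra. Qed.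
Lemma clip_le_incr x y : x <= y -> clip x <= clip y.
Proof. unfold clip, Rmax, Rmin. repeat destruct Rle_dec; lra. Qed.
Lemma clip_le_Rmax_0 y : clip y <= Rmax 0 y.
Proof. unfold clip, Rmax, Rmin. repeat destruct Rle_dec; lra. Qed.
Lemma one_minus_clip_le y : 1 - clip y <= Rmax 0 (1 - y).
Proof. unfold clip, Rmax, Rmin. repeat destruct Rle_dec; lra. Qed.
Lemma clip_id_error y : Rabs (clip y - y) <= Rmax 0 (- y) + Rmax 0 (y - 1).
Proof. apply Rabs_le. unfold clip, Rmax, Rmin. repeat destruct Rle_dec; split; lra. Qed.

Lemma clip_lipschitz x y : Rabs (clip x - clip y) <= Rabs (x - y).
Proof.
  pose proof (Rle_abs (x - y)). pose proof (Rle_abs (- (x - y))). rewrite Rabs_Ropp in *.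
  apply Rabs_le. unfold clip, Rmax, Rmin. repeat destruct Rle_dec; split; lra.
Qed.

Lemma continuous_clip_affine w k x : continuous (fun y => clip (w * y + k)) x.
Proof.
  apply continuous_lipschitz with (Rabs w). intros y.
  rewrite <- Rabs_mult. eapply Rle_trans; [apply clip_lipschitz|]. right; f_equal; ring.
Qed.
#[export] Hint Resolve continuous_clip_affine : cont.

Definition clamp (a b y : R) : R := Rmax a (Rmin b y).

Lemma clamp_cases a b y : a <= b ->
  (y <= a /\ clamp a b y = a) \/ (a <= y <= b /\ clamp a b y = y) \/ (b <= y /\ clamp a b y = b).
Proof.
  intros. unfold clamp. destruct (Rle_dec y a).
  - left. split; auto. rewrite Rmin_right by lra. apply Rmax_left; lra.
  - destruct (Rle_dec y b); right; [left | right]; split; try lra.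
    + rewrite Rmin_right by lra. apply Rmax_right; lra.
    + rewrite Rmin_left by lra. apply Rmax_right; lra.
Qed.

Lemma clamp_lipschitz a b y y' : a <= b -> Rabs (clamp a b y' - clamp a b y) <= Rabs (y' - y).
Proof.
  intros Hab. pose proof (Rle_abs (y' - y)). pose proof (Rle_abs (- (y' - y))). rewrite Rabs_Ropp in *.
  destruct (clamp_cases a b y Hab) as [[? E1] | [[? E1] | [? E1]]];
  destruct (clamp_cases a b y' Hab) as [[? E2] | [[? E2] | [? E2]]];
  rewrite E1, E2; apply Rabs_le; split; lra.
Qed.

Lemma clamp_le_Rmax a b y : a <= b -> clamp a b y <= Rmax a y.
Proof.
  intros. destruct (clamp_cases a b y) as [[? ->] | [[? ->] | [? ->]]]; auto;
  unfold Rmax; destruct Rle_dec; lra.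
Qed.

Lemma Rmin_le_clamp a b y : a <= b -> Rmin b y <= clamp a b y.
Proof.
  intros. destruct (clamp_cases a b y) as [[? ->] | [[? ->] | [? ->]]]; auto;
  unfold Rmin; destruct Rle_dec; lra.
Qed.

Lemma window_clamp a b c c' : a <= b -> c <= c' ->
  (a <= clamp a b c <= clamp a b c' /\ clamp a b c' <= b) /\
  (clamp a b c = a \/ clamp a b c <= c) /\ (clamp a b c' = b \/ c' <= clamp a b c') /\
  (clamp a b c = clamp a b c' \/ (c <= clamp a b c /\ clamp a b c' <= c')).
Proof.
  intros Hab Hc.
  destruct (clamp_cases a b c Hab) as [[? E1] | [[? E1] | [? E1]]];
  destruct (clamp_cases a b c' Hab) as [[? E2] | [[? E2] | [? E2]]];
  rewrite E1, E2; repeat split; lra.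
Qed.

Definition Err (h : nat) (v w : nat -> R) (f : R -> R) (th : nat -> R) (x : R) : R :=
  NN h v w th x - f x.

(** [x] lies in [I_i^th], without the intersection with [(a, b)]. *)
Definition active (w : nat -> R) (th : nat -> R) (i : nat) (x : R) : Prop :=
  psi w th i < x < psi w th i + / w i.

Definition params_close (h : nat) (th th' : nat -> R) (d : R) : Prop :=
  forall k, (1 <= k <= S h)%nat -> Rabs (th' k - th k) < d.

Lemma affine_psi (w th : nat -> R) i y : 0 < w i -> w i * y + th i = w i * (y - psi w th i).
Proof. intros. unfold psi. field. lra. Qed.

Lemma clip_active (w th : nat -> R) i y : 0 < w i -> active w th i y ->
  clip (w i * y + th i) = w i * (y - psi w th i).
Proof.
  intros Hw [H1 H2]. rewrite affine_psi by auto. apply clip_id. split; [nra|].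
  apply Rmult_lt_compat_l with (r := w i) in H2; [|auto].
  rewrite Rmult_plus_distr_l, Rinv_r in H2 by lra. lra.
Qed.

Lemma clip_change_active (w th : nat -> R) j y1 y2 : 0 < w j -> y1 < y2 ->
  clip (w j * y1 + th j) <> clip (w j * y2 + th j) -> exists u, y1 < u < y2 /\ active w th j u.
Proof.
  intros Hw Hy Hne. rewrite !affine_psi in Hne by auto. set (ps := psi w th j) in *.
  assert (Hiw : 0 < / w j) by (apply Rinv_0_lt_compat; auto).
  assert (A1 : ps < y2).
  { apply Rnot_le_lt. intros Hle. apply Hne. rewrite !clip_0; auto; nra. }
  assert (A2 : y1 < ps + / w j).
  { apply Rnot_le_lt. intros Hle. apply Hne.
    assert (w j * (ps + / w j - ps) = 1) by (field; lra). rewrite !clip_1; nra. }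
  exists ((Rmax y1 ps + Rmin y2 (ps + / w j)) / 2).
  assert (Rmax y1 ps < Rmin y2 (ps + / w j)) by (apply Rmax_lub_lt; apply Rmin_glb_lt; lra).
  pose proof (Rmax_l y1 ps). pose proof (Rmax_r y1 ps).
  pose proof (Rmin_l y2 (ps + / w j)). pose proof (Rmin_r y2 (ps + / w j)).
  unfold active. fold ps. split; split; lra.
Qed.

Section Network.

Variables (h : nat) (v w : nat -> R).
Hypothesis Hvw : forall i, (1 <= i <= h)%nat -> 0 < v i /\ 0 < w i.

Lemma sum1_v_nonneg : 0 <= sum1 h v.
Proof.
  rewrite sum1_lsum. apply lsum_nonneg. intros i Hi. apply in_seq1 in Hi. destruct (Hvw i Hi); lra.
Qed.

Lemma NN_sub th x y :
  NN h v w th y - NN h v w th x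
  = sum1 h (fun i => v i * (clip (w i * y + th i) - clip (w i * x + th i))).
Proof.
  unfold NN. rewrite !sum1_lsum.
  transitivity (lsum (seq 1 h) (fun i => v i * clip (w i * y + th i) - v i * clip (w i * x + th i))).
  - rewrite lsum_minus. ring.
  - apply lsum_ext. intros; ring.
Qed.

Lemma NN_le_incr th x y : x <= y -> NN h v w th x <= NN h v w th y.
Proof.
  intros Hxy. cut (0 <= NN h v w th y - NN h v w th x); [lra|].
  rewrite NN_sub. apply lsum_nonneg. intros i Hi. apply in_seq1 in Hi. destruct (Hvw i Hi).
  apply Rmult_le_pos; [lra|]. cut (clip (w i * x + th i) <= clip (w i * y + th i)); [lra|].
  apply clip_le_incr. nra.
Qed.

Lemma NN_lipschitz th x y :
  Rabs (NN h v w th y - NN h v w th x) <= sum1 h (fun i => v i * w i) * Rabs (y - x).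
Proof.
  rewrite NN_sub. eapply Rle_trans; [apply lsum_abs|].
  rewrite sum1_lsum, Rmult_comm, <- lsum_scal. apply lsum_le.
  intros i Hi. apply in_seq1 in Hi. destruct (Hvw i Hi).
  pose proof (clip_lipschitz (w i * y + th i) (w i * x + th i)).
  replace (w i * y + th i - (w i * x + th i)) with (w i * (y - x)) in H1 by ring.
  rewrite Rabs_mult, (Rabs_pos_eq (w i)) in H1 by lra.
  rewrite Rabs_mult, (Rabs_pos_eq (v i)) by lra. pose proof (Rabs_pos (y - x)). nra.
Qed.

Lemma NN_continuous th x : continuous (NN h v w th) x.
Proof. apply continuous_lipschitz with (sum1 h (fun i => v i * w i)). intros. apply NN_lipschitz. Qed.

Lemma NN_params_close th th' x d : params_close h th th' d ->
  Rabs (NN h v w th' x - NN h v w th x) <= (1 + sum1 h v) * d.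
Proof.
  intros Hc. unfold NN. rewrite !sum1_lsum.
  replace (th' (S h) + lsum (seq 1 h) (fun i => v i * clip (w i * x + th' i))
           - (th (S h) + lsum (seq 1 h) (fun i => v i * clip (w i * x + th i))))
    with ((th' (S h) - th (S h))
          + lsum (seq 1 h) (fun i => v i * (clip (w i * x + th' i) - clip (w i * x + th i))))
    by (rewrite <- (lsum_ext _ (fun i => v i * clip (w i * x + th' i) - v i * clip (w i * x + th i)))
          by (intros; ring); rewrite lsum_minus; ring).
  eapply Rle_trans; [apply Rabs_triang|]. rewrite Rmult_plus_distr_r, Rmult_1_l.
  apply Rplus_le_compat; [left; apply Hc; lia|].
  eapply Rle_trans; [apply lsum_abs|]. rewrite Rmult_comm, <- lsum_scal. apply lsum_le.
  intros i Hi. apply in_seq1 in Hi. destruct (Hvw i Hi).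
  rewrite Rabs_mult, Rabs_pos_eq, (Rmult_comm d) by lra. apply Rmult_le_compat_l; [lra|].
  eapply Rle_trans; [apply clip_lipschitz|].
  replace (w i * x + th' i - (w i * x + th i)) with (th' i - th i) by ring.
  left; apply Hc; lia.
Qed.

Lemma NN_upd th j s x : (1 <= j <= h)%nat ->
  NN h v w (upd th j s) x
  = NN h v w th x - v j * clip (w j * x + th j) + v j * clip (w j * x + s).
Proof.
  intros Hj. unfold NN, upd. replace (Nat.eqb (S h) j) with false by (symmetry; apply Nat.eqb_neq; lia).
  rewrite !sum1_lsum.
  cut (lsum (seq 1 h) (fun i => v i * clip (w i * x + (if Nat.eqb i j then s else th i))
                                - v i * clip (w i * x + th i))
       = v j * clip (w j * x + s) - v j * clip (w j * x + th j)).
  { rewrite lsum_minus. lra. }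
  rewrite (lsum_single _ _ j); [rewrite Nat.eqb_refl; ring | apply seq_NoDup | apply in_seq1; auto |].
  intros i _ Hij. apply Nat.eqb_neq in Hij. rewrite Hij. ring.
Qed.

Lemma NN_upd_last th s x : NN h v w (upd th (S h) s) x = NN h v w th x - th (S h) + s.
Proof.
  unfold NN, upd. rewrite Nat.eqb_refl, !sum1_lsum.
  rewrite (lsum_ext _ _ (fun i => v i * clip (w i * x + th i))); [ring|].
  intros i Hi. apply in_seq1 in Hi.
  replace (Nat.eqb i (S h)) with false by (symmetry; apply Nat.eqb_neq; lia).
  reflexivity.
Qed.

End Network.

(** * The gradient of the loss *)

Lemma sq_clip_incr_below u d Bx px MB Mp v : u <= 0 -> Rabs Bx <= MB -> 0 <= px <= Mp -> 0 < v ->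
  Rabs (((Bx + v * clip (u + d)) ^ 2 - (Bx + v * clip u) ^ 2) * px)
  <= v * (2 * MB + v) * Mp * Rmax 0 (u + d).
Proof.
  intros Hu HB Hp Hv. rewrite (clip_0 u Hu).
  pose proof (clip_range (u + d)). pose proof (clip_le_Rmax_0 (u + d)). pose proof (Rabs_pos Bx).
  replace (((Bx + v * clip (u + d)) ^ 2 - (Bx + v * 0) ^ 2) * px)
    with ((v * clip (u + d)) * ((2 * Bx + v * clip (u + d)) * px)) by ring.
  replace (v * (2 * MB + v) * Mp * Rmax 0 (u + d))
    with ((v * Rmax 0 (u + d)) * ((2 * MB + v) * Mp)) by ring.
  apply Rabs_mult_le; [rewrite Rabs_pos_eq; nra|].
  apply Rabs_mult_le; [|rewrite Rabs_pos_eq; lra].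
  eapply Rle_trans; [apply Rabs_triang|].
  rewrite !Rabs_mult, (Rabs_pos_eq 2), (Rabs_pos_eq v), (Rabs_pos_eq (clip _)) by lra. nra.
Qed.

Lemma sq_clip_incr_above u d Bx px MB Mp v : 1 <= u -> Rabs Bx <= MB -> 0 <= px <= Mp -> 0 < v ->
  Rabs (((Bx + v * clip (u + d)) ^ 2 - (Bx + v * clip u) ^ 2) * px)
  <= v * (2 * MB + 2 * v) * Mp * Rmax 0 (1 - (u + d)).
Proof.
  intros Hu HB Hp Hv. rewrite (clip_1 u Hu).
  pose proof (clip_range (u + d)). pose proof (one_minus_clip_le (u + d)). pose proof (Rabs_pos Bx).
  replace (((Bx + v * clip (u + d)) ^ 2 - (Bx + v * 1) ^ 2) * px)
    with ((v * (1 - clip (u + d))) * (- (2 * Bx + v * clip (u + d) + v) * px)) by ring.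
  replace (v * (2 * MB + 2 * v) * Mp * Rmax 0 (1 - (u + d)))
    with ((v * Rmax 0 (1 - (u + d))) * ((2 * MB + 2 * v) * Mp)) by ring.
  apply Rabs_mult_le; [rewrite Rabs_pos_eq; nra|].
  apply Rabs_mult_le; [|rewrite Rabs_pos_eq; lra].
  rewrite Rabs_Ropp. eapply Rle_trans; [apply Rabs_triang|].
  eapply Rle_trans; [apply Rplus_le_compat_r, Rabs_triang|].
  rewrite !Rabs_mult, (Rabs_pos_eq 2), (Rabs_pos_eq v), (Rabs_pos_eq (clip _)) by lra. nra.
Qed.

Lemma sq_clip_incr_linear u d Bx px MB Mp v : 0 <= u <= 1 -> Rabs Bx <= MB -> 0 <= px <= Mp -> 0 < v ->
  Rabs (((Bx + v * clip (u + d)) ^ 2 - (Bx + v * clip u) ^ 2) * px - 2 * v * d * ((Bx + v * clip u) * px))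
  <= 2 * v * (MB + v) * Mp * (Rmax 0 (- (u + d)) + Rmax 0 ((u + d) - 1)) + v ^ 2 * Mp * d ^ 2.
Proof.
  intros Hu HB Hp Hv. rewrite (clip_id u Hu).
  pose proof (clip_id_error (u + d)) as He. pose proof (clip_lipschitz (u + d) u) as Hl.
  rewrite (clip_id u Hu) in Hl. replace (u + d - u) with d in Hl by ring.
  set (e := clip (u + d) - u) in *. replace (clip (u + d)) with (u + e) by (unfold e; ring).
  replace (clip (u + d) - (u + d)) with (e - d) in He by (unfold e; ring).
  replace (((Bx + v * (u + e)) ^ 2 - (Bx + v * u) ^ 2) * px - 2 * v * d * ((Bx + v * u) * px))
    with ((2 * v * (e - d)) * ((Bx + v * u) * px) + (v ^ 2 * px) * e ^ 2) by ring.
  eapply Rle_trans; [apply Rabs_triang | apply Rplus_le_compat].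
  - replace (2 * v * (MB + v) * Mp * (Rmax 0 (- (u + d)) + Rmax 0 (u + d - 1)))
      with ((2 * v * (Rmax 0 (- (u + d)) + Rmax 0 (u + d - 1))) * ((MB + v) * Mp)) by ring.
    apply Rabs_mult_le.
    + rewrite !Rabs_mult, (Rabs_pos_eq 2), (Rabs_pos_eq v) by lra. pose proof (Rabs_pos (e - d)). nra.
    + apply Rabs_mult_le; [|rewrite Rabs_pos_eq; lra].
      eapply Rle_trans; [apply Rabs_triang|].
      rewrite Rabs_mult, (Rabs_pos_eq v), (Rabs_pos_eq u) by lra. nra.
  - assert (Rabs e ^ 2 <= d ^ 2).
    { rewrite <- (Rabs_pos_eq (d ^ 2)), <- RPow_abs by apply pow2_ge_0.
      pose proof (Rabs_pos e). simpl. rewrite !Rmult_1_r. apply Rmult_le_compat; auto. }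
    rewrite Rabs_mult, (Rabs_pos_eq (v ^ 2 * px)), <- RPow_abs by nra.
    pose proof (pow2_ge_0 (Rabs e)). pose proof (pow2_ge_0 v).
    apply Rmult_le_compat; auto; [nra | apply Rmult_le_compat_l; lra].
Qed.

Section ClipShiftDerivative.

Variables (a b : R) (B p : R -> R) (v w s0 MB Mp : R).
Hypotheses (Hv : 0 < v) (Hw : 0 < w).
Hypotheses (HB : forall x, continuous B x) (Hpc : forall x, continuous p x).
Hypothesis HMB : forall x, a <= x <= b -> Rabs (B x) <= MB.
Hypothesis HMp : forall x, a <= x <= b -> 0 <= p x <= Mp.

Let incr (d x : R) : R :=
  ((B x + v * clip (w * x + (s0 + d))) ^ 2 - (B x + v * clip (w * x + s0)) ^ 2) * p x.

Let slope (x : R) : R := (B x + v * clip (w * x + s0)) * p x.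

Lemma continuous_incr d x : continuous (incr d) x.
Proof. unfold incr. auto 6 with cont. Qed.

Lemma continuous_slope x : continuous slope x.
Proof. unfold slope. auto with cont. Qed.

#[local] Hint Resolve continuous_incr continuous_slope : cont.

Lemma RInt_incr_below l r d : a <= l -> l <= r -> r <= b -> (l = r \/ w * r + s0 <= 0) ->
  Rabs (RInt (incr d) l r) <= v * (2 * MB + v) * Mp / (2 * w) * d ^ 2.
Proof.
  intros Hl Hlr Hr Hc. pose proof (HMp a ltac:(lra)).
  apply Rle_trans with (RInt (fun x => v * (2 * MB + v) * Mp * Rmax 0 (w * x + (s0 + d))) l r).
  - apply abs_RInt_le_fun; auto with cont.
    intros x Hx. unfold incr. replace (w * x + (s0 + d)) with (w * x + s0 + d) by ring.
    apply sq_clip_incr_below; auto; [|apply HMB; lra | apply HMp; lra].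
    destruct Hc as [-> | Hc]; nra.
  - rewrite RInt_scal_R by auto with cont.
    replace (v * (2 * MB + v) * Mp / (2 * w) * d ^ 2)
      with (v * (2 * MB + v) * Mp * (d ^ 2 / (2 * w))) by (field; lra).
    pose proof (Rabs_pos (B a)). pose proof (HMB a ltac:(lra)).
    apply Rmult_le_compat_l; [apply Rmult_le_pos; nra | apply RInt_ramp_up_le; auto].
Qed.

Lemma RInt_incr_above l r d : a <= l -> l <= r -> r <= b -> (l = r \/ 1 <= w * l + s0) ->
  Rabs (RInt (incr d) l r) <= v * (2 * MB + 2 * v) * Mp / (2 * w) * d ^ 2.
Proof.
  intros Hl Hlr Hr Hc. pose proof (HMp a ltac:(lra)).
  apply Rle_trans with
    (RInt (fun x => v * (2 * MB + 2 * v) * Mp * Rmax 0 ((- w) * x + (- ((s0 - 1) + d)))) l r).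
  - apply abs_RInt_le_fun; auto with cont.
    intros x Hx. unfold incr. replace (w * x + (s0 + d)) with (w * x + s0 + d) by ring.
    replace ((- w) * x + (- ((s0 - 1) + d))) with (1 - (w * x + s0 + d)) by ring.
    apply sq_clip_incr_above; auto; [|apply HMB; lra | apply HMp; lra].
    destruct Hc as [-> | Hc]; nra.
  - rewrite RInt_scal_R by auto with cont.
    replace (v * (2 * MB + 2 * v) * Mp / (2 * w) * d ^ 2)
      with (v * (2 * MB + 2 * v) * Mp * (d ^ 2 / (2 * w))) by (field; lra).
    pose proof (Rabs_pos (B a)). pose proof (HMB a ltac:(lra)).
    apply Rmult_le_compat_l; [apply Rmult_le_pos; nra | apply RInt_ramp_down_le; auto].
    destruct Hc; [left | right]; lra.
Qed.

Lemma RInt_incr_linear l r d : a <= l -> l <= r -> r <= b ->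
  (l = r \/ (0 <= w * l + s0 /\ w * r + s0 <= 1)) ->
  Rabs (RInt (fun x => incr d x - 2 * v * d * slope x) l r)
  <= (2 * v * (MB + v) * Mp / w + v ^ 2 * Mp * (b - a)) * d ^ 2.
Proof.
  intros Hl Hlr Hr Hc. pose proof (HMp a ltac:(lra)).
  pose proof (Rabs_pos (B a)). pose proof (HMB a ltac:(lra)). pose proof (pow2_ge_0 d).
  set (K := 2 * v * (MB + v) * Mp).
  assert (HK : 0 <= K) by (unfold K; apply Rmult_le_pos; nra).
  apply Rle_trans with (RInt (fun x => K * (Rmax 0 ((- w) * x + (- (s0 + d)))
                                          + Rmax 0 (w * x + ((s0 - 1) + d))) + v ^ 2 * Mp * d ^ 2) l r).
  - apply abs_RInt_le_fun; auto with cont.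
    + intros x Hx. unfold incr, slope, K. replace (w * x + (s0 + d)) with (w * x + s0 + d) by ring.
      replace ((- w) * x + (- (s0 + d))) with (- (w * x + s0 + d)) by ring.
      replace (w * x + ((s0 - 1) + d)) with ((w * x + s0 + d) - 1) by ring.
      apply sq_clip_incr_linear; auto; [|apply HMB; lra | apply HMp; lra].
      destruct Hc as [-> | Hc]; [lra|]. split; nra.
  - rewrite RInt_plus_R, RInt_scal_R, RInt_plus_R, RInt_const_R by auto with cont.
    assert (I1 : RInt (fun x => Rmax 0 ((- w) * x + (- (s0 + d)))) l r <= d ^ 2 / (2 * w)).
    { apply RInt_ramp_down_le; auto. destruct Hc as [-> | [Hc _]]; auto. }
    assert (I2 : RInt (fun x => Rmax 0 (w * x + ((s0 - 1) + d))) l r <= d ^ 2 / (2 * w)).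
    { apply RInt_ramp_up_le; auto. destruct Hc as [-> | [_ Hc]]; [left | right]; lra. }
    assert ((r - l) * (v ^ 2 * Mp * d ^ 2) <= (b - a) * (v ^ 2 * Mp * d ^ 2)).
    { apply Rmult_le_compat_r; [|lra]. pose proof (pow2_ge_0 v). apply Rmult_le_pos; nra. }
    replace ((K / w + v ^ 2 * Mp * (b - a)) * d ^ 2)
      with (K * (d ^ 2 / (2 * w) + d ^ 2 / (2 * w)) + (b - a) * (v ^ 2 * Mp * d ^ 2)) by (field; lra).
    pose proof (Rmult_le_compat_l K _ _ HK (Rplus_le_compat _ _ _ _ I1 I2)). lra.
Qed.

End ClipShiftDerivative.

(** Shifting [s] by [d] moves the integrand to first order only where
    [0 <= w x + s <= 1]; near the two kinks of [clip] the error is bounded by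
    ramps of height [|d|] and width [|d| / w], whence an [O(d^2)] remainder. *)
Lemma is_derive_RInt_clip_shift a b (B p : R -> R) v w s0 :
  a < b -> 0 < v -> 0 < w -> (forall x, continuous B x) -> (forall x, continuous p x) ->
  (forall x, 0 <= p x) ->
  is_derive (fun s => RInt (fun x => (B x + v * clip (w * x + s)) ^ 2 * p x) a b) s0
    (2 * v * RInt (fun x => (B x + v * clip (w * x + s0)) * p x)
                  (clamp a b (- / w * s0)) (clamp a b (- / w * s0 + / w))).
Proof.
  intros Hab Hv Hw HB Hpc Hp0.
  destruct (continuous_bounded_on B a b) as [MB [_ HMB]]; auto; [lra|].
  destruct (continuous_bounded_on p a b) as [Mp [_ HMp]]; auto; [lra|].
  assert (HMp' : forall x, a <= x <= b -> 0 <= p x <= Mp)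
    by (intros x Hx; specialize (HMp x Hx); rewrite Rabs_pos_eq in HMp; auto).
  set (c := - / w * s0). assert (Hc : forall x, w * x + s0 = w * (x - c)) by (intros; unfold c; field; lra).
  assert (Hiw : 0 < / w) by (apply Rinv_0_lt_compat; lra).
  destruct (window_clamp a b c (c + / w)) as [Hwin [Hlo [Hhi Hmid]]]; [lra | lra |].
  set (lo := clamp a b c) in *. set (hi := clamp a b (c + / w)) in *.
  assert (Hwi : w * / w = 1) by (field; lra).
  apply is_derive_quadratic_error with (r := 1)
    (K := v * (2 * MB + v) * Mp / (2 * w) + (2 * v * (MB + v) * Mp / w + v ^ 2 * Mp * (b - a))
          + v * (2 * MB + 2 * v) * Mp / (2 * w)); [lra|].
  intros d _ _.
  set (incr := fun x => ((B x + v * clip (w * x + (s0 + d))) ^ 2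
                         - (B x + v * clip (w * x + s0)) ^ 2) * p x).
  set (slope := fun x => (B x + v * clip (w * x + s0)) * p x).
  assert (Hci := continuous_incr B p v w s0 HB Hpc d).
  assert (Hcs := continuous_slope B p v w s0 HB Hpc).
  rewrite <- RInt_minus_R by auto 8 with cont.
  rewrite (RInt_ext_R _ incr) by (intros; unfold incr; ring).
  rewrite <- (RInt_Chasles_R incr a lo b), <- (RInt_Chasles_R incr lo hi b) by auto with cont.
  assert (Hsplit : RInt incr a lo + (RInt incr lo hi + RInt incr hi b) - d * (2 * v * RInt slope lo hi)
     = RInt incr a lo + RInt (fun x => incr x - 2 * v * d * slope x) lo hi + RInt incr hi b).
  { rewrite RInt_minus_R, RInt_scal_R by auto with cont. ring. }
  rewrite Hsplit.
  assert (B1 := RInt_incr_below a b B p v w s0 MB Mp Hv Hw HB Hpc HMB HMp' a lo d).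
  assert (B2 := RInt_incr_linear a b B p v w s0 MB Mp Hv Hw HB Hpc HMB HMp' lo hi d).
  assert (B3 := RInt_incr_above a b B p v w s0 MB Mp Hv Hw HB Hpc HMB HMp' hi b d).
  match goal with |- _ <= (?k1 + ?k2 + ?k3) * ?e =>
    replace ((k1 + k2 + k3) * e) with (k1 * e + k2 * e + k3 * e) by ring end.
  eapply Rle_trans; [apply Rabs_triang|]. apply Rplus_le_compat; [|apply B3; try lra].
  eapply Rle_trans; [apply Rabs_triang|]. apply Rplus_le_compat; [apply B1 | apply B2]; try lra.
  - destruct Hlo as [-> | Hlo]; [left; auto | right; rewrite Hc; nra].
  - destruct Hmid as [-> | [H1 H2]]; [left; auto | right; rewrite !Hc; split; nra].
  - destruct Hhi as [-> | Hhi]; [left; auto | right; rewrite Hc; nra].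
Qed.

(** [[win_lo, win_hi]] is the closure of [I_j^th] (degenerate when [I_j^th] is empty). *)
Definition win_lo (a b : R) (w th : nat -> R) (j : nat) : R := clamp a b (psi w th j).
Definition win_hi (a b : R) (w th : nat -> R) (j : nat) : R := clamp a b (psi w th j + / w j).

Definition grad_explicit (a b : R) (h : nat) (v w : nat -> R) (f p : R -> R)
  (th : nat -> R) (j : nat) : R :=
  if Nat.eqb j (S h) then 2 * RInt (fun x => Err h v w f th x * p x) a b
  else 2 * v j * RInt (fun x => Err h v w f th x * p x) (win_lo a b w th j) (win_hi a b w th j).

Lemma window_le a b (w th : nat -> R) j : a <= b -> 0 < w j ->
  a <= win_lo a b w th j <= win_hi a b w th j /\ win_hi a b w th j <= b.
Proof.
  intros Hab Hw. apply window_clamp; auto.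
  pose proof (Rinv_0_lt_compat _ Hw). lra.
Qed.

Lemma active_iff_window a b (w th : nat -> R) j x : a < b -> 0 < w j -> a < x < b ->
  (active w th j x <-> win_lo a b w th j < x < win_hi a b w th j).
Proof.
  intros Hab Hw Hx. unfold active, win_lo, win_hi. pose proof (Rinv_0_lt_compat _ Hw).
  destruct (clamp_cases a b (psi w th j) ltac:(lra)) as [[? E1] | [[? E1] | [? E1]]];
  destruct (clamp_cases a b (psi w th j + / w j) ltac:(lra)) as [[? E2] | [[? E2] | [? E2]]];
  rewrite E1, E2; split; intros; lra.
Qed.

Lemma window_width_le_left a b (w th : nat -> R) j : a <= b ->
  win_hi a b w th j - win_lo a b w th j <= Rmax 0 (psi w th j - (a - / w j)).
Proof.
  intros Hab. unfold win_lo, win_hi.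
  pose proof (Rmax_l 0 (psi w th j - (a - / w j))). pose proof (Rmax_r 0 (psi w th j - (a - / w j))).
  destruct (clamp_cases a b (psi w th j) Hab) as [[? E1] | [[? E1] | [? E1]]];
  destruct (clamp_cases a b (psi w th j + / w j) Hab) as [[? E2] | [[? E2] | [? E2]]];
  rewrite E1, E2; lra.
Qed.

Lemma window_width_le_right a b (w th : nat -> R) j : a <= b ->
  win_hi a b w th j - win_lo a b w th j <= Rmax 0 (b - psi w th j).
Proof.
  intros Hab. unfold win_lo, win_hi.
  pose proof (Rmax_l 0 (b - psi w th j)). pose proof (Rmax_r 0 (b - psi w th j)).
  destruct (clamp_cases a b (psi w th j) Hab) as [[? E1] | [[? E1] | [? E1]]];
  destruct (clamp_cases a b (psi w th j + / w j) Hab) as [[? E2] | [[? E2] | [? E2]]];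
  rewrite E1, E2; lra.
Qed.

Lemma RInt_window_shift (F : R -> R) a b M l r l' r' e : (forall x, continuous F x) ->
  (forall x, a <= x <= b -> Rabs (F x) <= M) ->
  a <= l <= b -> a <= r <= b -> a <= l' <= b -> a <= r' <= b ->
  Rabs (l' - l) <= e -> Rabs (r' - r) <= e ->
  Rabs (RInt F l' r' - RInt F l r) <= 2 * e * M.
Proof.
  intros Hc HM Hl Hr Hl' Hr' Hll Hrr.
  assert (HM0 : 0 <= M) by (eapply Rle_trans; [apply Rabs_pos | apply (HM a); lra]).
  assert (Hin : forall y z x, a <= y <= b -> a <= z <= b -> Rmin y z <= x <= Rmax y z -> a <= x <= b).
  { intros y z x Hy Hz Hx. pose proof (Rmin_glb y z a). pose proof (Rmax_lub y z b). lra. }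
  replace (RInt F l' r' - RInt F l r) with (RInt F l' l + RInt F r r')
    by (rewrite <- (RInt_Chasles_R F l' l r'), <- (RInt_Chasles_R F l r r') by auto with cont; ring).
  eapply Rle_trans; [apply Rabs_triang|].
  pose proof (abs_RInt_le_const_R F l' l M Hc ltac:(intros x Hx; apply HM, (Hin l' l); auto)).
  pose proof (abs_RInt_le_const_R F r r' M Hc ltac:(intros x Hx; apply HM, (Hin r r'); auto)).
  rewrite Rabs_minus_sym in Hll.
  pose proof (Rmult_le_compat_r M _ _ HM0 Hll). pose proof (Rmult_le_compat_r M _ _ HM0 Hrr). lra.
Qed.

Section Gradient.

Variables (a b : R) (h : nat) (v w : nat -> R) (f p : R -> R).
Hypothesis Hab : a < b.
Hypothesis Hvw : forall i, (1 <= i <= h)%nat -> 0 < v i /\ 0 < w i.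
Hypotheses (Hf : forall x, continuous f x) (Hpc : forall x, continuous p x).

Lemma Err_continuous th x : continuous (Err h v w f th) x.
Proof. unfold Err. apply continuous_minus_R; auto. apply NN_continuous; auto. Qed.

Lemma Err_p_continuous th x : continuous (fun y => Err h v w f th y * p y) x.
Proof. apply continuous_mult_R; auto. apply Err_continuous. Qed.

#[local] Hint Resolve Err_continuous Err_p_continuous : cont.

Lemma Err_params_close th th' x d : params_close h th th' d ->
  Rabs (Err h v w f th' x - Err h v w f th x) <= (1 + sum1 h v) * d.
Proof.
  intros Hc. unfold Err. replace (NN h v w th' x - f x - (NN h v w th x - f x))
    with (NN h v w th' x - NN h v w th x) by ring.
  apply NN_params_close; auto.
Qed.

Hypothesis Hp0 : forall x, 0 <= p x.

Lemma gradLoss_explicit th j : (1 <= j <= S h)%nat ->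
  gradLoss a b h v w f p th j = grad_explicit a b h v w f p th j.
Proof.
  intros Hj. unfold gradLoss, grad_explicit. destruct (Nat.eqb_spec j (S h)) as [-> | Hne].
  - set (t0 := th (S h)).
    set (A0 := RInt (fun x => Err h v w f th x ^ 2 * p x) a b).
    set (A1 := RInt (fun x => Err h v w f th x * p x) a b).
    assert (HL : forall s, Loss a b h v w f p (upd th (S h) s)
                           = A0 + 2 * (s - t0) * A1 + (s - t0) ^ 2 * RInt p a b).
    { intros s. unfold Loss, A0, A1. rewrite <- !RInt_scal_R, <- !RInt_plus_R by auto 7 with cont.
      apply RInt_ext_R. intros x _. rewrite NN_upd_last. unfold Err, t0. ring. }
    rewrite (Derive_ext _ _ _ HL). apply is_derive_unique.
    apply is_derive_quadratic_error with (K := Rabs (RInt p a b)) (r := 1); [lra|].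
    intros d _ _. replace (t0 + d - t0) with d by ring. replace (t0 - t0) with 0 by ring.
    replace (A0 + 2 * d * A1 + d ^ 2 * RInt p a b - (A0 + 2 * 0 * A1 + 0 ^ 2 * RInt p a b) - d * (2 * A1))
      with (RInt p a b * d ^ 2) by ring.
    rewrite Rabs_mult, (Rabs_pos_eq (d ^ 2)) by apply pow2_ge_0. lra.
  - assert (Hj' : (1 <= j <= h)%nat) by lia. destruct (Hvw j Hj') as [Hv Hw].
    set (Bj := fun x => NN h v w th x - v j * clip (w j * x + th j) - f x).
    assert (HL : forall s, Loss a b h v w f p (upd th j s)
                           = RInt (fun x => (Bj x + v j * clip (w j * x + s)) ^ 2 * p x) a b).
    { intros s. apply RInt_ext_R. intros x _. rewrite NN_upd by auto. unfold Bj. f_equal. f_equal. ring. }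
    rewrite (Derive_ext _ _ _ HL). apply is_derive_unique.
    replace (RInt (fun x => Err h v w f th x * p x) (win_lo a b w th j) (win_hi a b w th j))
      with (RInt (fun x => (Bj x + v j * clip (w j * x + th j)) * p x)
                 (clamp a b (- / w j * th j)) (clamp a b (- / w j * th j + / w j)))
      by (apply RInt_ext_R; intros; unfold Bj, Err; ring).
    apply is_derive_RInt_clip_shift; auto.
    intros x. unfold Bj. apply continuous_minus_R; auto.
    apply continuous_minus_R; [apply NN_continuous; auto | auto with cont].
Qed.

Lemma grad_explicit_window_bound th i ME Mp : (1 <= i <= h)%nat ->
  (forall x, a <= x <= b -> Rabs (Err h v w f th x) <= ME) ->
  (forall x, a <= x <= b -> Rabs (p x) <= Mp) ->
  Rabs (grad_explicit a b h v w f p th i)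
  <= 2 * v i * (ME * Mp) * (win_hi a b w th i - win_lo a b w th i).
Proof.
  intros Hi HE HP. destruct (Hvw i Hi) as [Hv Hw].
  destruct (window_le a b w th i) as [H1 H2]; auto; [lra|].
  unfold grad_explicit. destruct (Nat.eqb_spec i (S h)); [lia|].
  rewrite Rabs_mult, (Rabs_pos_eq (2 * v i)) by lra.
  replace (2 * v i * (ME * Mp) * (win_hi a b w th i - win_lo a b w th i))
    with (2 * v i * ((win_hi a b w th i - win_lo a b w th i) * (ME * Mp))) by ring.
  apply Rmult_le_compat_l; [lra|].
  apply abs_RInt_le_const; [lra | auto with cont|].
  intros x Hx. rewrite Rabs_mult. apply Rmult_le_compat; try apply Rabs_pos; [apply HE | apply HP]; lra.
Qed.

Lemma RInt_Err_p_params_close th th' d Mp l r : params_close h th th' d ->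
  (forall x, a <= x <= b -> Rabs (p x) <= Mp) -> a <= l <= r -> r <= b ->
  Rabs (RInt (fun x => Err h v w f th' x * p x) l r - RInt (fun x => Err h v w f th x * p x) l r)
  <= (b - a) * ((1 + sum1 h v) * d * Mp).
Proof.
  intros Hc Hpb Hl Hr. pose proof (sum1_v_nonneg h v w Hvw).
  assert (0 <= d) by (specialize (Hc 1%nat ltac:(lia)); pose proof (Rabs_pos (th' 1%nat - th 1%nat)); lra).
  assert (0 <= Mp) by (eapply Rle_trans; [apply Rabs_pos | apply (Hpb a); lra]).
  rewrite <- RInt_minus_R by auto with cont.
  apply Rle_trans with ((r - l) * ((1 + sum1 h v) * d * Mp)).
  - apply abs_RInt_le_const; [lra | auto with cont|]. intros x Hx.
    replace (Err h v w f th' x * p x - Err h v w f th x * p x)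
      with ((Err h v w f th' x - Err h v w f th x) * p x) by ring.
    apply Rabs_mult_le; [apply Err_params_close; auto | apply Hpb; lra].
  - apply Rmult_le_compat_r; [apply Rmult_le_pos; [apply Rmult_le_pos|]|]; lra.
Qed.

Lemma window_params_close th th' j d : (1 <= j <= h)%nat -> params_close h th th' d ->
  Rabs (win_lo a b w th' j - win_lo a b w th j) <= / w j * d /\
  Rabs (win_hi a b w th' j - win_hi a b w th j) <= / w j * d.
Proof.
  intros Hj Hc. destruct (Hvw j Hj) as [_ Hw]. pose proof (Rinv_0_lt_compat _ Hw).
  assert (Hpsi : Rabs (psi w th' j - psi w th j) <= / w j * d).
  { unfold psi. replace (- / w j * th' j - - / w j * th j) with (/ w j * (- (th' j - th j))) by ring.
    rewrite Rabs_mult, Rabs_Ropp, (Rabs_pos_eq (/ w j)) by lra.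
    apply Rmult_le_compat_l; [lra|]. left; apply Hc; lia. }
  unfold win_lo, win_hi. split; (eapply Rle_trans; [apply clamp_lipschitz; lra|]); auto.
  replace (psi w th' j + / w j - (psi w th j + / w j)) with (psi w th' j - psi w th j) by ring. auto.
Qed.

Lemma grad_explicit_lipschitz th j : (1 <= j <= S h)%nat ->
  exists L, 0 <= L /\ forall th' d, 0 <= d -> params_close h th th' d ->
    Rabs (grad_explicit a b h v w f p th' j - grad_explicit a b h v w f p th j) <= L * d.
Proof.
  intros Hj.
  destruct (continuous_bounded_on (fun x => Err h v w f th x * p x) a b) as [M [HM HMb]];
    [lra | auto with cont |].
  destruct (continuous_bounded_on p a b) as [Mp [HMp Hpb]]; auto; [lra|].
  assert (HC : 0 <= 1 + sum1 h v) by (pose proof (sum1_v_nonneg h v w Hvw); lra).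
  set (C := 1 + sum1 h v) in *.
  unfold grad_explicit. destruct (Nat.eqb_spec j (S h)) as [-> | Hne].
  - exists (2 * ((b - a) * (C * Mp))). split; [apply Rmult_le_pos; [lra | apply Rmult_le_pos; nra]|].
    intros th' d Hd Hc. rewrite <- Rmult_minus_distr_l, Rabs_mult, Rabs_pos_eq by lra.
    replace (2 * ((b - a) * (C * Mp)) * d) with (2 * ((b - a) * (C * d * Mp))) by ring.
    apply Rmult_le_compat_l; [lra|]. apply RInt_Err_p_params_close; auto; lra.
  - assert (Hj' : (1 <= j <= h)%nat) by lia. destruct (Hvw j Hj') as [Hv Hw].
    assert (Hiw : 0 < / w j) by (apply Rinv_0_lt_compat; auto).
    exists (2 * v j * ((b - a) * (C * Mp) + 2 * / w j * M)).
    split; [apply Rmult_le_pos; [lra | apply Rplus_le_le_0_compat; apply Rmult_le_pos; nra]|].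
    intros th' d Hd Hc.
    destruct (window_le a b w th j) as [Hl1 Hl2]; auto; [lra|].
    destruct (window_le a b w th' j) as [Hl1' Hl2']; auto; [lra|].
    destruct (window_params_close th th' j d Hj' Hc) as [Hll Hrr].
    pose proof (RInt_window_shift (fun x => Err h v w f th x * p x) a b M
                  (win_lo a b w th j) (win_hi a b w th j) (win_lo a b w th' j) (win_hi a b w th' j)
                  (/ w j * d) ltac:(auto with cont) HMb ltac:(lra) ltac:(lra) ltac:(lra) ltac:(lra) Hll Hrr).
    pose proof (RInt_Err_p_params_close th th' d Mp (win_lo a b w th' j) (win_hi a b w th' j)
                  Hc Hpb ltac:(lra) ltac:(lra)) as Hdiff. fold C in Hdiff.
    rewrite <- Rmult_minus_distr_l, Rabs_mult, (Rabs_pos_eq (2 * v j)) by lra.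
    replace (2 * v j * ((b - a) * (C * Mp) + 2 * / w j * M) * d)
      with (2 * v j * ((b - a) * (C * d * Mp) + 2 * (/ w j * d) * M)) by ring.
    apply Rmult_le_compat_l; [lra|].
    match goal with |- Rabs (?I' - ?I) <= _ =>
      match I' with RInt _ ?l' ?r' =>
        replace (I' - I) with ((I' - RInt (fun x => Err h v w f th x * p x) l' r')
                               + (RInt (fun x => Err h v w f th x * p x) l' r' - I)) by ring end end.
    eapply Rle_trans; [apply Rabs_triang | lra].
Qed.

Lemma grad_explicit_nonneg th i : (1 <= i <= h)%nat ->
  (forall x, win_lo a b w th i < x < win_hi a b w th i -> 0 <= Err h v w f th x) ->
  0 <= grad_explicit a b h v w f p th i.
Proof.
  intros Hi HE. destruct (Hvw i Hi) as [Hv Hw]. destruct (window_le a b w th i) as [H1 H2]; auto; [lra|].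
  unfold grad_explicit. destruct (Nat.eqb_spec i (S h)); [lia|].
  apply Rmult_le_pos; [lra|]. apply RInt_ge_0; [lra | auto with cont|].
  intros x Hx. apply Rmult_le_pos; auto.
Qed.

Lemma grad_explicit_nonpos th i : (1 <= i <= h)%nat ->
  (forall x, win_lo a b w th i < x < win_hi a b w th i -> Err h v w f th x <= 0) ->
  grad_explicit a b h v w f p th i <= 0.
Proof.
  intros Hi HE. destruct (Hvw i Hi) as [Hv Hw]. destruct (window_le a b w th i) as [H1 H2]; auto; [lra|].
  unfold grad_explicit. destruct (Nat.eqb_spec i (S h)); [lia|].
  cut (RInt (fun x => Err h v w f th x * p x) (win_lo a b w th i) (win_hi a b w th i) <= 0); [nra|].
  rewrite <- (Rmult_0_r (win_hi a b w th i - win_lo a b w th i)).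
  apply RInt_le_const; [lra | auto with cont|]. intros x Hx. specialize (HE x Hx). specialize (Hp0 x). nra.
Qed.

End Gradient.

#[export] Hint Resolve Err_continuous Err_p_continuous : cont.

Lemma coord_le_dist_h h (th th' : nat -> R) k : (1 <= k <= S h)%nat ->
  Rabs (th k - th' k) <= dist_h h th th'.
Proof.
  intros Hk. unfold dist_h. rewrite <- sqrt_Rsqr_abs. apply sqrt_le_1_alt.
  rewrite sum1_lsum, Rsqr_pow2. apply (lsum_ge_term _ (fun j => (th j - th' j) ^ 2)).
  - apply in_seq1; auto.
  - intros; apply pow2_ge_0.
Qed.

(** * The gradient flow *)

Section GradientFlow.

Variables (a b : R) (h : nat) (v w : nat -> R) (f p : R -> R) (Theta : R -> nat -> R).
Hypothesis Hab : a < b.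
Hypothesis Hvw : forall i, (1 <= i <= h)%nat -> 0 < v i /\ 0 < w i.
Hypotheses (Hf : forall x, continuous f x) (Hpc : forall x, continuous p x).
Hypothesis Hp0 : forall x, 0 <= p x.
Hypothesis HTc : forall j, (1 <= j <= S h)%nat -> forall t, 0 <= t ->
  filterlim (fun s => Theta s j) (within (fun s => 0 <= s) (locally t)) (locally (Theta t j)).
Hypothesis HI : forall t, 0 <= t -> forall j, (1 <= j <= S h)%nat ->
  Theta t j = Theta 0 j - RInt (fun s => gradLoss a b h v w f p (Theta s) j) 0 t.

(** The flow is extended to negative times by [Theta 0], so that continuity
    statements can be made on the whole real line. *)
Let flow_grad (j : nat) (s : R) : R := grad_explicit a b h v w f p (Theta (Rmax 0 s)) j.

Lemma flow_coord_close_eps j t : (1 <= j <= S h)%nat -> 0 <= t ->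
  forall eps, 0 < eps -> exists eta, 0 < eta /\
    forall s, 0 <= s -> Rabs (s - t) < eta -> Rabs (Theta s j - Theta t j) < eps.
Proof.
  intros Hj Ht eps He. specialize (HTc j Hj t Ht). rewrite filterlim_locally in HTc.
  destruct (HTc (mkposreal eps He)) as [eta Heta].
  exists eta. split; [apply cond_pos|]. intros s Hs Hst. apply Heta; auto.
Qed.

Lemma flow_params_close t : 0 <= t -> forall d, 0 < d -> exists eta, 0 < eta /\
  forall s, 0 <= s -> Rabs (s - t) < eta -> params_close h (Theta t) (Theta s) d.
Proof.
  intros Ht d Hd.
  destruct (finite_common_radius (seq 1 (S h)) (fun k eta => forall s, 0 <= s -> Rabs (s - t) < eta ->
              Rabs (Theta s k - Theta t k) < d)) as [eta [He HP]].
  - intros k e e' He' HP s Hs Hst. apply HP; auto. lra.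
  - intros k Hk. apply in_seq1 in Hk. apply flow_coord_close_eps; auto.
  - exists eta. split; auto. intros s Hs Hst k Hk. apply HP; auto. apply in_seq1; auto.
Qed.

Lemma flow_coord_continuous j s : (1 <= j <= S h)%nat -> continuous (fun s => Theta (Rmax 0 s) j) s.
Proof.
  intros Hj. apply continuous_eps_delta. intros eps He.
  destruct (flow_coord_close_eps j (Rmax 0 s) Hj (Rmax_l 0 s) eps He) as [eta [Heta Hn]].
  exists eta. split; auto. intros y Hy. apply Hn; [apply Rmax_l|].
  eapply Rle_lt_trans; [apply Rmax_0_lipschitz | auto].
Qed.

Lemma flow_grad_continuous j s : (1 <= j <= S h)%nat -> continuous (flow_grad j) s.
Proof.
  intros Hj. apply continuous_eps_delta. intros eps He.
  set (t := Rmax 0 s).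
  destruct (grad_explicit_lipschitz a b h v w f p Hab Hvw Hf Hpc (Theta t) j Hj) as [L [HL HLb]].
  assert (Hd : 0 < eps / (L + 1)) by (apply Rdiv_lt_0_compat; lra).
  destruct (flow_params_close t (Rmax_l 0 s) (eps / (L + 1)) Hd) as [eta [Heta Hcl]].
  exists eta. split; auto. intros y Hy. unfold flow_grad. fold t.
  eapply Rle_lt_trans; [apply (HLb _ (eps / (L + 1))); [lra | apply Hcl; [apply Rmax_l|]]|].
  - eapply Rle_lt_trans; [apply Rmax_0_lipschitz | auto].
  - replace eps with ((L + 1) * (eps / (L + 1))) at 2 by (field; lra).
    apply Rmult_lt_compat_r; lra.
Qed.

Lemma flow_increment j T t : (1 <= j <= S h)%nat -> 0 <= T -> 0 <= t ->
  Theta t j - Theta T j = - RInt (flow_grad j) T t.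
Proof.
  intros Hj HT Ht.
  assert (Hgrad : forall t, 0 <= t -> RInt (fun s => gradLoss a b h v w f p (Theta s) j) 0 t
                                      = RInt (flow_grad j) 0 t).
  { intros t' Ht'. apply RInt_ext_R. intros x Hx. rewrite Rmin_left, Rmax_right in Hx by lra.
    unfold flow_grad. rewrite Rmax_right by lra. apply gradLoss_explicit; auto. }
  assert (Hc : forall x, continuous (flow_grad j) x) by (intros; apply flow_grad_continuous; auto).
  rewrite (HI t), (HI T), !Hgrad by auto.
  rewrite <- (RInt_Chasles_R _ 0 T t) by auto with cont. ring.
Qed.

Lemma psi_flow_increment i t : (1 <= i <= h)%nat -> 0 <= t ->
  psi w (Theta t) i = psi w (Theta 0) i + RInt (fun s => / w i * flow_grad i s) 0 t.
Proof.
  intros Hi Ht. rewrite RInt_scal_R by (apply ex_RInt_R; intros; apply flow_grad_continuous; lia).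
  unfold psi. pose proof (flow_increment i 0 t ltac:(lia) ltac:(lra) Ht). nra.
Qed.

Lemma flow_grad_window_bound i t : (1 <= i <= h)%nat -> 0 <= t ->
  exists eta K, 0 < eta /\ 0 <= K /\ forall s, 0 <= s -> Rabs (s - t) < eta ->
    Rabs (flow_grad i s) <= K * (win_hi a b w (Theta s) i - win_lo a b w (Theta s) i).
Proof.
  intros Hi Ht.
  destruct (continuous_bounded_on (Err h v w f (Theta t)) a b) as [M [HM HMb]]; [lra | auto with cont|].
  destruct (continuous_bounded_on p a b) as [Mp [HMp Hpb]]; auto; [lra|].
  destruct (flow_params_close t Ht 1 ltac:(lra)) as [eta [Heta Hcl]].
  destruct (Hvw i Hi) as [Hv Hw].
  set (ME := M + (1 + sum1 h v) * 1).
  assert (HME : forall s, 0 <= s -> Rabs (s - t) < eta ->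
                forall x, a <= x <= b -> Rabs (Err h v w f (Theta s) x) <= ME).
  { intros s Hs Hst x Hx.
    pose proof (Err_params_close h v w f Hvw (Theta t) (Theta s) x 1 (Hcl s Hs Hst)).
    pose proof (HMb x Hx). pose proof (Rabs_triang_inv (Err h v w f (Theta s) x) (Err h v w f (Theta t) x)).
    unfold ME. lra. }
  assert (0 <= ME).
  { apply Rle_trans with (Rabs (Err h v w f (Theta t) a)); [apply Rabs_pos|].
    apply HME; [auto | rewrite Rminus_diag, Rabs_R0; lra | lra]. }
  exists eta, (2 * v i * (ME * Mp)). repeat split; auto; [apply Rmult_le_pos; nra|].
  intros s Hs Hst. unfold flow_grad. rewrite Rmax_right by auto.
  apply grad_explicit_window_bound; auto.
Qed.

Variable vartheta : nat -> R.
Hypothesis Hlim : is_lim (fun t => dist_h h (Theta t) vartheta) p_infty 0.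

Lemma flow_eventually_close d : 0 < d -> exists T, forall t, T < t -> params_close h vartheta (Theta t) d.
Proof.
  intros Hd. destruct (proj1 (is_lim_p_infty_eps _ _) Hlim d Hd) as [T HT].
  exists T. intros t Ht k Hk. specialize (HT t Ht).
  pose proof (coord_le_dist_h h (Theta t) vartheta k Hk). rewrite Rminus_0_r in HT.
  pose proof (Rle_abs (dist_h h (Theta t) vartheta)). lra.
Qed.

Lemma flow_coord_limit j : (1 <= j <= S h)%nat -> is_lim (fun t => Theta t j) p_infty (vartheta j).
Proof.
  intros Hj. apply is_lim_p_infty_eps. intros e He.
  destruct (flow_eventually_close e He) as [T HT]. exists T. intros t Ht. apply HT; auto.
Qed.

Lemma flow_limit_critical j : (1 <= j <= S h)%nat -> grad_explicit a b h v w f p vartheta j = 0.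
Proof.
  intros Hj. apply (drift_limit_zero (fun t => Theta t j) (flow_grad j) (vartheta j)).
  - intros; apply flow_grad_continuous; auto.
  - intros T t HT Ht. apply flow_increment; auto.
  - apply flow_coord_limit; auto.
  - apply is_lim_p_infty_eps. intros e He.
    destruct (grad_explicit_lipschitz a b h v w f p Hab Hvw Hf Hpc vartheta j Hj) as [L [HL HLb]].
    destruct (flow_eventually_close (e / (L + 1))) as [T HT]; [apply Rdiv_lt_0_compat; lra|].
    exists (Rmax 0 T). intros t Ht. unfold flow_grad. rewrite Rmax_right by (pose proof (Rmax_l 0 T); lra).
    eapply Rle_lt_trans; [apply (HLb _ (e / (L + 1))) | ].
    + left; apply Rdiv_lt_0_compat; lra.
    + apply HT. pose proof (Rmax_r 0 T). lra.
    + replace e with ((L + 1) * (e / (L + 1))) at 2 by (field; lra).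
      apply Rmult_lt_compat_r; [apply Rdiv_lt_0_compat|]; lra.
Qed.

Lemma Err_flow_eventually_near x0 eta : 0 < eta -> exists e0 T, 0 < e0 /\ forall t x, T < t ->
  Rabs (x - x0) < e0 -> Rabs (Err h v w f (Theta t) x - Err h v w f vartheta x0) < eta.
Proof.
  intros Heta.
  destruct (proj1 (continuous_eps_delta _ x0) (Err_continuous h v w f Hvw Hf vartheta x0) (eta / 2))
    as [e0 [He0 Hc0]]; [lra|].
  assert (HC : 0 <= 1 + sum1 h v) by (pose proof (sum1_v_nonneg h v w Hvw); lra).
  set (C := 1 + sum1 h v) in *.
  destruct (flow_eventually_close (eta / (2 * (C + 1)))) as [T HT]; [apply Rdiv_lt_0_compat; lra|].
  exists e0, T. split; auto. intros t x Ht Hx.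
  pose proof (Err_params_close h v w f Hvw vartheta (Theta t) x _ (HT t Ht)). specialize (Hc0 x Hx).
  assert (C * (eta / (2 * (C + 1))) <= eta / 2).
  { replace (eta / 2) with ((C + 1) * (eta / (2 * (C + 1)))) by (field; lra).
    apply Rmult_le_compat_r; [left; apply Rdiv_lt_0_compat|]; lra. }
  pose proof (Rabs_triang (Err h v w f (Theta t) x - Err h v w f vartheta x)
                          (Err h v w f vartheta x - Err h v w f vartheta x0)).
  replace (Err h v w f (Theta t) x - Err h v w f vartheta x
           + (Err h v w f vartheta x - Err h v w f vartheta x0))
    with (Err h v w f (Theta t) x - Err h v w f vartheta x0) in H1 by ring.
  fold C in H. lra.
Qed.

Lemma psi_flow_limit i : (1 <= i <= h)%nat ->
  is_lim (fun t => psi w (Theta (Rmax 0 t)) i) p_infty (psi w vartheta i).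
Proof.
  intros Hi. destruct (Hvw i Hi) as [_ Hw]. apply is_lim_p_infty_eps. intros e He.
  destruct (flow_eventually_close (w i * e)) as [T HT]; [nra|].
  exists (Rmax 0 T). intros t Ht. pose proof (Rmax_l 0 T). pose proof (Rmax_r 0 T).
  rewrite Rmax_right by lra. specialize (HT t ltac:(lra) i ltac:(lia)).
  unfold psi. replace (- / w i * Theta t i - - / w i * vartheta i)
    with (/ w i * - (Theta t i - vartheta i)) by ring.
  rewrite Rabs_mult, Rabs_Ropp, Rabs_pos_eq by (left; apply Rinv_0_lt_compat; auto).
  apply Rmult_lt_reg_l with (w i); auto. rewrite <- Rmult_assoc, Rinv_r, Rmult_1_l by lra. auto.
Qed.

(** Neuron [i] cannot leave through the left end: while [Err] is positive at
    [a], the gradient pushes [psi_i] to the right whenever [I_i] is close to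
    [a], and near the barrier the window (hence the speed) is small. *)
Lemma psi_limit_gt_left i : (1 <= i <= h)%nat ->
  a - / w i < psi w (Theta 0) i -> 0 < Err h v w f vartheta a -> a - / w i < psi w vartheta i.
Proof.
  intros Hi H0 Ha. destruct (Hvw i Hi) as [Hv Hw].
  apply (limit_above_barrier (fun t => psi w (Theta (Rmax 0 t)) i) (fun s => / w i * flow_grad i s)).
  - intros. unfold psi. apply continuous_mult_R; auto with cont. apply flow_coord_continuous. lia.
  - intros. apply continuous_mult_R; auto with cont. apply flow_grad_continuous. lia.
  - intros t Ht. rewrite !Rmax_right by lra. apply psi_flow_increment; auto.
  - rewrite Rmax_right by lra. auto.
  - intros t Ht. destruct (flow_grad_window_bound i t Hi Ht) as [eta [K [Heta [HK HB]]]].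
    exists eta, (/ w i * K). split; auto.
    split; [apply Rmult_le_pos; auto; left; apply Rinv_0_lt_compat; auto|].
    intros s Hs Hst. rewrite (Rmax_right 0 s) by auto. rewrite Rabs_mult, Rabs_pos_eq, Rmult_assoc
      by (left; apply Rinv_0_lt_compat; auto).
    apply Rmult_le_compat_l; [left; apply Rinv_0_lt_compat; auto|].
    eapply Rle_trans; [apply HB; auto|]. apply Rmult_le_compat_l; auto. apply window_width_le_left. lra.
  - destruct (Err_flow_eventually_near a (Err h v w f vartheta a) Ha) as [e0 [T [He0 Hnear]]].
    exists e0, (Rmax 0 T + 1). split; auto. intros t Ht Hpsi.
    assert (HT : 0 <= t /\ T < t) by (pose proof (Rmax_l 0 T); pose proof (Rmax_r 0 T); lra).
    rewrite Rmax_right in Hpsi by lra.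
    apply Rmult_le_pos; [left; apply Rinv_0_lt_compat; auto|]. unfold flow_grad. rewrite Rmax_right by lra.
    apply grad_explicit_nonneg; auto. intros x Hx.
    destruct (window_le a b w (Theta t) i) as [Hw1 Hw2]; auto; [lra|].
    pose proof (clamp_le_Rmax a b (psi w (Theta t) i + / w i) ltac:(lra)).
    fold (win_hi a b w (Theta t) i) in H.
    assert (x < psi w (Theta t) i + / w i) by (unfold Rmax in H; destruct Rle_dec; lra).
    specialize (Hnear t x ltac:(lra) ltac:(rewrite Rabs_pos_eq; lra)).
    pose proof (Rle_abs (- (Err h v w f (Theta t) x - Err h v w f vartheta a))). rewrite Rabs_Ropp in *. lra.
  - apply psi_flow_limit; auto.
Qed.

Lemma psi_limit_lt_right i : (1 <= i <= h)%nat ->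
  psi w (Theta 0) i < b -> Err h v w f vartheta b < 0 -> psi w vartheta i < b.
Proof.
  intros Hi H0 Hb. destruct (Hvw i Hi) as [Hv Hw].
  cut (- b < - psi w vartheta i); [lra|].
  apply (limit_above_barrier (fun t => - psi w (Theta (Rmax 0 t)) i) (fun s => - / w i * flow_grad i s)).
  - intros. unfold psi. apply continuous_opp_R, continuous_mult_R; auto with cont.
    apply flow_coord_continuous. lia.
  - intros. apply continuous_mult_R; auto with cont. apply flow_grad_continuous. lia.
  - intros t Ht. rewrite !Rmax_right by lra. rewrite psi_flow_increment by auto.
    rewrite !RInt_scal_R by (apply ex_RInt_R; intros; apply flow_grad_continuous; lia). ring.
  - rewrite Rmax_right by lra. lra.
  - intros t Ht. destruct (flow_grad_window_bound i t Hi Ht) as [eta [K [Heta [HK HB]]]].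
    exists eta, (/ w i * K). split; auto.
    split; [apply Rmult_le_pos; auto; left; apply Rinv_0_lt_compat; auto|].
    intros s Hs Hst. rewrite (Rmax_right 0 s) by auto. rewrite Rabs_mult, Rabs_Ropp, Rabs_pos_eq, Rmult_assoc
      by (left; apply Rinv_0_lt_compat; auto).
    apply Rmult_le_compat_l; [left; apply Rinv_0_lt_compat; auto|].
    eapply Rle_trans; [apply HB; auto|]. apply Rmult_le_compat_l; auto.
    replace (- psi w (Theta s) i - - b) with (b - psi w (Theta s) i) by ring.
    apply window_width_le_right. lra.
  - destruct (Err_flow_eventually_near b (- Err h v w f vartheta b) ltac:(lra)) as [e0 [T [He0 Hnear]]].
    exists e0, (Rmax 0 T + 1). split; auto. intros t Ht Hpsi.
    assert (HT : 0 <= t /\ T < t) by (pose proof (Rmax_l 0 T); pose proof (Rmax_r 0 T); lra).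
    rewrite Rmax_right in Hpsi by lra.
    cut (flow_grad i t <= 0).
    { intros. pose proof (Rinv_0_lt_compat _ Hw). nra. }
    unfold flow_grad. rewrite Rmax_right by lra.
    apply grad_explicit_nonpos; auto. intros x Hx.
    destruct (window_le a b w (Theta t) i) as [Hw1 Hw2]; auto; [lra|].
    pose proof (Rmin_le_clamp a b (psi w (Theta t) i) ltac:(lra)). fold (win_lo a b w (Theta t) i) in H.
    assert (b - e0 < x) by (unfold Rmin in H; destruct Rle_dec; lra).
    specialize (Hnear t x ltac:(lra) ltac:(rewrite Rabs_left; lra)).
    pose proof (Rle_abs (Err h v w f (Theta t) x - Err h v w f vartheta b)). lra.
  - apply (is_lim_opp _ _ (psi w vartheta i)). apply psi_flow_limit; auto.
Qed.

End GradientFlow.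

(** * Critical points of the loss *)

Lemma ind_open_1 l u x : l < x < u -> ind_open l u x = 1.
Proof. intros. unfold ind_open. destruct Rlt_dec; [destruct Rlt_dec|]; lra. Qed.
Lemma ind_open_0 l u x : ~ (l < x < u) -> ind_open l u x = 0.
Proof. intros. unfold ind_open. destruct Rlt_dec; [destruct Rlt_dec|]; auto; lra. Qed.
Lemma ind_open_range l u x : 0 <= ind_open l u x <= 1.
Proof. unfold ind_open. repeat destruct Rlt_dec; lra. Qed.

Definition active_weight (a b : R) (h : nat) (v w th : nat -> R) (x : R) : R :=
  sum1 h (fun i => v i * (ind_open (psi w th i) (psi w th i + / w i) x * ind_open a b x)).

Section ActiveWeight.

Variables (a b : R) (h : nat) (v w : nat -> R).
Hypothesis Hvw : forall i, (1 <= i <= h)%nat -> 0 < v i /\ 0 < w i.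

Lemma active_weight_le_Vsup th x : a < x < b -> active_weight a b h v w th x <= Vsup a b h v w th.
Proof.
  intros Hx. unfold Vsup. fold (active_weight a b h v w th).
  set (S := fun r => exists x, a < x < b /\ r = active_weight a b h v w th x).
  change (active_weight a b h v w th x <= real (Lub_Rbar S)).
  assert (Hub : forall r, S r -> r <= sum1 h v).
  { intros r [y [_ ->]]. unfold active_weight. rewrite !sum1_lsum. apply lsum_le.
    intros i Hi. apply in_seq1 in Hi. destruct (Hvw i Hi).
    pose proof (ind_open_range (psi w th i) (psi w th i + / w i) y). pose proof (ind_open_range a b y).
    assert (ind_open (psi w th i) (psi w th i + / w i) y * ind_open a b y <= 1) by nra. nra. }
  destruct (Lub_Rbar_correct S) as [Hlub Hleast].
  specialize (Hlub _ (ex_intro _ x (conj Hx eq_refl))).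
  specialize (Hleast (Finite (sum1 h v)) (fun r Hr => Hub r Hr)).
  destruct (Lub_Rbar S); simpl in *; tauto || contradiction.
Qed.

Lemma Vsup_nonneg th : a < b -> 0 <= Vsup a b h v w th.
Proof.
  intros Hab. eapply Rle_trans; [|apply (active_weight_le_Vsup th ((a + b) / 2)); lra].
  apply lsum_nonneg. intros i Hi. apply in_seq1 in Hi. destruct (Hvw i Hi).
  pose proof (ind_open_range (psi w th i) (psi w th i + / w i) ((a + b) / 2)).
  pose proof (ind_open_range a b ((a + b) / 2)). apply Rmult_le_pos; [lra | nra].
Qed.

(** Only neurons active somewhere in [(y1, y2)] change their clipped value
    there, each contributing at most [v_j]. *)
Lemma NN_sub_le_Vsup th y1 y2 z : y1 < y2 -> a < z < b ->
  (forall j u, (1 <= j <= h)%nat -> y1 < u < y2 -> active w th j u -> active w th j z) ->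
  NN h v w th y2 - NN h v w th y1 <= Vsup a b h v w th.
Proof.
  intros Hy Hz HA. eapply Rle_trans; [|apply (active_weight_le_Vsup th z Hz)].
  rewrite NN_sub by auto. unfold active_weight. rewrite !sum1_lsum. apply lsum_le.
  intros j Hj. apply in_seq1 in Hj. destruct (Hvw j Hj) as [Hv Hw].
  pose proof (ind_open_range (psi w th j) (psi w th j + / w j) z). pose proof (ind_open_range a b z).
  destruct (Req_dec (clip (w j * y1 + th j)) (clip (w j * y2 + th j))) as [Heq | Hne].
  - rewrite Heq, Rminus_diag, Rmult_0_r. apply Rmult_le_pos; [lra | nra].
  - destruct (clip_change_active w th j y1 y2 Hw Hy Hne) as [u [Hu Hau]].
    rewrite (ind_open_1 _ _ z (HA j u Hj Hu Hau)), (ind_open_1 a b z Hz).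
    pose proof (clip_range (w j * y1 + th j)). pose proof (clip_range (w j * y2 + th j)). nra.
Qed.

Lemma NN_inactive_const th y1 y2 : y1 < y2 ->
  (forall j u, (1 <= j <= h)%nat -> y1 < u < y2 -> ~ active w th j u) ->
  NN h v w th y2 = NN h v w th y1.
Proof.
  intros Hy HA. cut (NN h v w th y2 - NN h v w th y1 = 0); [lra|].
  rewrite NN_sub by auto. apply lsum_zero. intros j Hj. apply in_seq1 in Hj. destruct (Hvw j Hj) as [Hv Hw].
  destruct (Req_dec (clip (w j * y1 + th j)) (clip (w j * y2 + th j))) as [Heq | Hne].
  - rewrite Heq. ring.
  - destruct (clip_change_active w th j y1 y2 Hw Hy Hne) as [u [Hu Hau]]. exfalso. apply (HA j u); auto.
Qed.

Lemma NN_sub_ge_active th i u q : (1 <= i <= h)%nat -> active w th i u -> active w th i q -> u <= q ->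
  v i * w i * (q - u) <= NN h v w th q - NN h v w th u.
Proof.
  intros Hi Hu Hq Huq. destruct (Hvw i Hi) as [Hv Hw]. rewrite NN_sub, sum1_lsum by auto.
  eapply Rle_trans;
    [|apply (lsum_ge_term _ (fun j => v j * (clip (w j * q + th j) - clip (w j * u + th j))) i)].
  - rewrite !clip_active by auto. right; ring.
  - apply in_seq1; auto.
  - intros j Hj. apply in_seq1 in Hj. destruct (Hvw j Hj). apply Rmult_le_pos; [lra|].
    cut (clip (w j * u + th j) <= clip (w j * q + th j)); [lra|]. apply clip_le_incr. nra.
Qed.

Lemma NN_rise_ge_count th0 th : a <= b ->
  (forall i, (1 <= i <= h)%nat -> a - / w i < psi w th0 i < b ->
     a <= psi w th i /\ psi w th i + / w i <= b) ->
  sum1 h (fun i => v i * ind_open (a - / w i) b (psi w th0 i)) <= NN h v w th b - NN h v w th a.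
Proof.
  intros Hab Hin. rewrite NN_sub by auto. apply lsum_le. intros i Hi. apply in_seq1 in Hi.
  destruct (Hvw i Hi) as [Hv Hw]. pose proof (clip_le_incr (w i * a + th i) (w i * b + th i) ltac:(nra)).
  destruct (classic (a - / w i < psi w th0 i < b)) as [Hc | Hc].
  - destruct (Hin i Hi Hc) as [Ha Hb]. rewrite ind_open_1 by auto.
    assert (Hb' : 1 <= w i * (b - psi w th i)).
    { replace 1 with (w i * / w i) by (field; lra). apply Rmult_le_compat_l; lra. }
    assert (Ha' : w i * (a - psi w th i) <= 0) by nra.
    rewrite !affine_psi, clip_1, clip_0 by auto. lra.
  - rewrite ind_open_0, Rmult_0_r by auto. apply Rmult_le_pos; lra.
Qed.

End ActiveWeight.

Lemma min_vw_le h (v w : nat -> R) i : (1 <= i <= h)%nat -> min_vw h v w <= v i * w i.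
Proof.
  intros Hi. unfold min_vw. assert (Hin : In i (seq 1 h)) by (apply in_seq1; auto).
  generalize (v 1%nat * w 1%nat). induction (seq 1 h) as [|x l IH]; [contradiction|].
  intros r. simpl. destruct Hin as [<- | Hin]; [apply Rmin_l|].
  eapply Rle_trans; [apply Rmin_r | apply IH; auto].
Qed.

Lemma Lip_lt_slope (f : R -> R) a b c x y : Rbar_lt (Lip f a b) (Finite c) ->
  a <= x -> x < y -> y <= b -> f y - f x < c * (y - x).
Proof.
  intros HL Hx Hxy Hy.
  assert (Hr : Rbar_le (Rabs (f x - f y) / Rabs (x - y)) (Lip f a b)).
  { apply Lub_Rbar_correct. exists x, y. repeat split; lra. }
  assert (Hr2 : Rabs (f x - f y) / Rabs (x - y) < c) by (destruct (Lip f a b); simpl in *; try tauto; lra).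
  rewrite Rabs_minus_sym, (Rabs_minus_sym x), (Rabs_pos_eq (y - x)) in Hr2 by lra.
  apply Rmult_lt_compat_r with (r := y - x) in Hr2; [|lra].
  unfold Rdiv in Hr2. rewrite Rmult_assoc, Rinv_l, Rmult_1_r in Hr2 by lra.
  pose proof (Rle_abs (f y - f x)). lra.
Qed.

Section CriticalPoint.

Variables (a b : R) (h : nat) (v w : nat -> R) (f p : R -> R) (th : nat -> R).
Hypothesis Hab : a < b.
Hypothesis Hvw : forall i, (1 <= i <= h)%nat -> 0 < v i /\ 0 < w i.
Hypotheses (Hf : forall x, continuous f x) (Hpc : forall x, continuous p x).
Hypothesis Hpos : forall x, 0 < p x <-> a < x < b.
Hypothesis Hmono : forall x y, x <= y -> f x <= f y.
Hypothesis HLip : Rbar_lt (Lip f a b) (Finite (min_vw h v w)).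
Hypothesis Hcrit : forall i, (1 <= i <= h)%nat ->
  RInt (fun x => Err h v w f th x * p x) (win_lo a b w th i) (win_hi a b w th i) = 0.

Let E := Err h v w f th.
Let V := Vsup a b h v w th.

(** The slope [v_i w_i] of an active neuron beats [Lip f]. *)
Lemma Err_strict_incr_active i u q : (1 <= i <= h)%nat -> active w th i u -> active w th i q ->
  a <= u -> u < q -> q <= b -> E u < E q.
Proof.
  intros Hi Hu Hq Ha Huq Hb. pose proof (NN_sub_ge_active h v w Hvw th i u q Hi Hu Hq ltac:(lra)).
  pose proof (Lip_lt_slope f a b _ u q HLip Ha Huq Hb). pose proof (min_vw_le h v w i Hi).
  unfold E, Err. nra.
Qed.

Lemma active_window_sign_change i u : (1 <= i <= h)%nat -> a < u < b -> active w th i u ->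
  (exists q, a < q < b /\ active w th i q /\ E q <= 0) /\
  (exists q, a < q < b /\ active w th i q /\ 0 <= E q).
Proof.
  intros Hi Hu Hau. destruct (Hvw i Hi) as [_ Hw].
  destruct (window_le a b w th i) as [Hl1 Hl2]; [lra | auto |].
  pose proof (proj1 (active_iff_window a b w th i u Hab Hw Hu) Hau).
  destruct (RInt_weighted_sign_change E p (win_lo a b w th i) (win_hi a b w th i))
    as [[q1 [Hq1 Hs1]] [q2 [Hq2 Hs2]]]; auto; try lra.
  - intros; apply Err_continuous; auto.
  - intros x Hx. apply Hpos. lra.
  - split; [exists q1 | exists q2]; repeat split; auto; try lra;
      apply (active_iff_window a b w th i); auto; lra.
Qed.

Lemma active_nonpos_left i u : (1 <= i <= h)%nat -> a < u < b -> active w th i u -> 0 < E u ->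
  exists q, a < q < u /\ active w th i q /\ E q <= 0.
Proof.
  intros Hi Hu Hau HE. destruct (active_window_sign_change i u Hi Hu Hau) as [[q [Hq [Haq HEq]]] _].
  exists q. split; [|split; auto]. split; [lra|]. apply Rnot_le_lt. intros Huq.
  destruct (Req_dec q u) as [-> | Hne]; [lra|].
  pose proof (Err_strict_incr_active i u q Hi Hau Haq). lra.
Qed.

Lemma active_nonneg_right i u : (1 <= i <= h)%nat -> a < u < b -> active w th i u -> E u < 0 ->
  exists q, u < q < b /\ active w th i q /\ 0 <= E q.
Proof.
  intros Hi Hu Hau HE. destruct (active_window_sign_change i u Hi Hu Hau) as [_ [q [Hq [Haq HEq]]]].
  exists q. split; [|split; auto]. split; [|lra]. apply Rnot_le_lt. intros Hqu.
  destruct (Req_dec q u) as [-> | Hne]; [lra|].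
  pose proof (Err_strict_incr_active i q u Hi Haq Hau). lra.
Qed.

(** Go left from [x0] to the last point [z] where [E <= 0] (or to [a]).  Every
    neuron active in [(z, x0)] is active at [z], since its window also meets
    [{E <= 0}]; so [N] rises by at most [V] on [[z, x0]]. *)
Lemma Err_pos_bound x0 : a < x0 < b -> 0 < E x0 ->
  E x0 <= V \/ (E x0 <= E a /\ forall j u, (1 <= j <= h)%nat -> a < u < x0 -> ~ active w th j u).
Proof.
  intros Hx0 HE.
  destruct (first_nonpos_point (fun s => E (- s)) (- x0) (- a)) as [m [Hm [Hzm Hpos_m]]];
    [intros; apply (continuous_comp (fun s => - s) E);
       [apply continuous_opp_R, continuous_id | apply Err_continuous; auto]
    | lra | rewrite Ropp_involutive; auto |].
  set (z := - m).
  assert (Hz : a <= z < x0) by (unfold z; lra).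
  assert (HEz : z = a \/ E z <= 0) by (unfold z; destruct Hzm as [-> | ?]; [left; ring | right; auto]).
  assert (Hright : forall y, z < y <= x0 -> 0 < E y).
  { intros y Hy. replace y with (- - y) by ring. apply Hpos_m. unfold z in Hy. lra. }
  assert (Hshare : forall j u, (1 <= j <= h)%nat -> z < u < x0 -> active w th j u ->
                   a < z /\ active w th j z).
  { intros j u Hj Hu Hau.
    destruct (active_nonpos_left j u Hj ltac:(lra) Hau (Hright u ltac:(lra))) as [q [Hq [Haq HEq]]].
    assert (q <= z) by (apply Rnot_lt_le; intros Hzq; pose proof (Hright q ltac:(lra)); lra).
    unfold active in *. lra. }
  destruct (Req_dec z a) as [Hza | Hza].
  - right. rewrite Hza in Hshare.
    assert (Hnone : forall j u, (1 <= j <= h)%nat -> a < u < x0 -> ~ active w th j u)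
      by (intros j u Hj Hu Hau; destruct (Hshare j u Hj Hu Hau); lra).
    split; auto. pose proof (NN_inactive_const h v w Hvw th a x0 ltac:(lra) Hnone).
    pose proof (Hmono a x0 ltac:(lra)). unfold E, Err. lra.
  - left. destruct HEz as [| HEz]; [contradiction|].
    pose proof (NN_sub_le_Vsup a b h v w Hvw th z x0 z ltac:(lra) ltac:(lra)
                  ltac:(intros j u Hj Hu Hau; apply (Hshare j u Hj Hu Hau))).
    pose proof (Hmono z x0 ltac:(lra)). unfold E, Err, V in *. lra.
Qed.

Lemma Err_neg_bound x0 : a < x0 < b -> E x0 < 0 ->
  - V <= E x0 \/ (E b <= E x0 /\ forall j u, (1 <= j <= h)%nat -> x0 < u < b -> ~ active w th j u).
Proof.
  intros Hx0 HE.
  destruct (first_nonpos_point (fun s => - E s) x0 b) as [z [Hz [Hzm Hneg]]];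
    [intros; apply continuous_opp_R, Err_continuous; auto | lra | lra |].
  assert (HEz : z = b \/ 0 <= E z) by (destruct Hzm as [-> | ?]; [left | right; lra]; auto).
  assert (Hleft : forall y, x0 <= y < z -> E y < 0) by (intros y Hy; specialize (Hneg y Hy); lra).
  assert (Hshare : forall j u, (1 <= j <= h)%nat -> x0 < u < z -> active w th j u ->
                   z < b /\ active w th j z).
  { intros j u Hj Hu Hau.
    destruct (active_nonneg_right j u Hj ltac:(lra) Hau (Hleft u ltac:(lra))) as [q [Hq [Haq HEq]]].
    assert (z <= q) by (apply Rnot_lt_le; intros Hqz; pose proof (Hleft q ltac:(lra)); lra).
    unfold active in *. lra. }
  destruct (Req_dec z b) as [Hzb | Hzb].
  - right. rewrite Hzb in Hshare.
    assert (Hnone : forall j u, (1 <= j <= h)%nat -> x0 < u < b -> ~ active w th j u)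
      by (intros j u Hj Hu Hau; destruct (Hshare j u Hj Hu Hau); lra).
    split; auto. pose proof (NN_inactive_const h v w Hvw th x0 b ltac:(lra) Hnone).
    pose proof (Hmono x0 b ltac:(lra)). unfold E, Err. lra.
  - left. destruct HEz as [| HEz]; [contradiction|].
    pose proof (NN_sub_le_Vsup a b h v w Hvw th x0 z z ltac:(lra) ltac:(lra)
                  ltac:(intros j u Hj Hu Hau; apply (Hshare j u Hj Hu Hau))).
    pose proof (Hmono x0 z ltac:(lra)). unfold E, Err, V in *. lra.
Qed.


Lemma V_nonneg : 0 <= V.
Proof. apply Vsup_nonneg; auto. Qed.

(** Just right of [a] we would have [E > V] together with an active neuron,
    contradicting [Err_pos_bound]. *)
Lemma no_straddle_left i : (1 <= i <= h)%nat -> V < E a ->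
  ~ (psi w th i < a < psi w th i + / w i).
Proof.
  intros Hi HEa Hact. pose proof V_nonneg.
  destruct (proj1 (continuous_eps_delta E a) (Err_continuous h v w f Hvw Hf th a) (E a - V))
    as [e0 [He0 Hc0]]; [lra|].
  set (e := Rmin e0 (Rmin (psi w th i + / w i - a) (b - a))).
  assert (He : 0 < e /\ e <= e0 /\ e <= psi w th i + / w i - a /\ e <= b - a).
  { unfold e. pose proof (Rmin_l e0 (Rmin (psi w th i + / w i - a) (b - a))).
    pose proof (Rmin_r e0 (Rmin (psi w th i + / w i - a) (b - a))).
    pose proof (Rmin_l (psi w th i + / w i - a) (b - a)).
    pose proof (Rmin_r (psi w th i + / w i - a) (b - a)).
    repeat split; try lra. repeat apply Rmin_glb_lt; lra. }
  set (x0 := a + e / 2).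
  assert (HEx0 : V < E x0).
  { specialize (Hc0 x0 ltac:(unfold x0; rewrite Rabs_pos_eq; lra)).
    pose proof (Rle_abs (- (E x0 - E a))). rewrite Rabs_Ropp in *. lra. }
  destruct (Err_pos_bound x0) as [| [_ Hnone]]; [unfold x0; lra | lra | lra |].
  apply (Hnone i ((a + x0) / 2) Hi); unfold x0, active; lra.
Qed.

Lemma no_straddle_right i : (1 <= i <= h)%nat -> E b < - V ->
  ~ (psi w th i < b < psi w th i + / w i).
Proof.
  intros Hi HEb Hact. pose proof V_nonneg.
  destruct (proj1 (continuous_eps_delta E b) (Err_continuous h v w f Hvw Hf th b) (- V - E b))
    as [e0 [He0 Hc0]]; [lra|].
  set (e := Rmin e0 (Rmin (b - psi w th i) (b - a))).
  assert (He : 0 < e /\ e <= e0 /\ e <= b - psi w th i /\ e <= b - a).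
  { unfold e. pose proof (Rmin_l e0 (Rmin (b - psi w th i) (b - a))).
    pose proof (Rmin_r e0 (Rmin (b - psi w th i) (b - a))).
    pose proof (Rmin_l (b - psi w th i) (b - a)). pose proof (Rmin_r (b - psi w th i) (b - a)).
    repeat split; try lra. repeat apply Rmin_glb_lt; lra. }
  set (x0 := b - e / 2).
  assert (HEx0 : E x0 < - V).
  { specialize (Hc0 x0 ltac:(unfold x0; rewrite Rabs_left; lra)).
    pose proof (Rle_abs (E x0 - E b)). lra. }
  destruct (Err_neg_bound x0) as [| [_ Hnone]]; [unfold x0; lra | lra | lra |].
  apply (Hnone i ((b + x0) / 2) Hi); unfold x0, active; lra.
Qed.

Lemma Err_le_upper x : a < x < b -> E x <= V + Rmax 0 (E a - V).
Proof.
  intros Hx. pose proof (Rmax_l 0 (E a - V)). pose proof (Rmax_r 0 (E a - V)).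
  destruct (Rlt_dec 0 (E x)) as [HEx | HEx]; [|pose proof V_nonneg; lra].
  destruct (Err_pos_bound x Hx HEx) as [| [? _]]; lra.
Qed.

Lemma Err_ge_lower x : a < x < b -> - (V + Rmax 0 (- E b - V)) <= E x.
Proof.
  intros Hx. pose proof (Rmax_l 0 (- E b - V)). pose proof (Rmax_r 0 (- E b - V)).
  destruct (Rlt_dec (E x) 0) as [HEx | HEx]; [|pose proof V_nonneg; lra].
  destruct (Err_neg_bound x Hx HEx) as [| [? _]]; lra.
Qed.

Hypothesis Hcrit_out : RInt (fun x => Err h v w f th x * p x) a b = 0.

Lemma Err_left_le_rise : E a <= f b - f a.
Proof.
  destruct (RInt_weighted_sign_change E p a b) as [[q [Hq HEq]] _]; auto.
  - intros; apply Err_continuous; auto.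
  - intros; apply Hpos; auto.
  - pose proof (NN_le_incr h v w Hvw th a q ltac:(lra)). pose proof (Hmono q b ltac:(lra)).
    unfold E, Err in *. lra.
Qed.

Lemma Err_right_ge_drop : - (f b - f a) <= E b.
Proof.
  destruct (RInt_weighted_sign_change E p a b) as [_ [q [Hq HEq]]]; auto.
  - intros; apply Err_continuous; auto.
  - intros; apply Hpos; auto.
  - pose proof (NN_le_incr h v w Hvw th q b ltac:(lra)). pose proof (Hmono a q ltac:(lra)).
    unfold E, Err in *. lra.
Qed.

Lemma Loss_le_of_end_bound : (forall x, 0 <= p x) -> E a <= V \/ - V <= E b ->
  Loss a b h v w f p th <= (2 * V ^ 2 + (f b - f a) * V) * RInt p a b.
Proof.
  intros Hp0 Hend. pose proof V_nonneg as H.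
  set (al := Rmax 0 (E a - V)). set (be := Rmax 0 (- E b - V)).
  assert (Hal : 0 <= al) by apply Rmax_l. assert (Hbe : 0 <= be) by apply Rmax_l.
  assert (Hprod : al * be = 0).
  { destruct Hend; [unfold al | unfold be]; rewrite Rmax_left by lra; ring. }
  assert (Hsum : al + be <= f b - f a).
  { pose proof Err_left_le_rise. pose proof Err_right_ge_drop. pose proof (Hmono a b ltac:(lra)).
    unfold al, be, Rmax. repeat destruct Rle_dec; lra. }
  assert (HP : 0 <= RInt p a b) by (apply RInt_ge_0; auto with cont; lra).
  eapply Rle_trans.
  { apply (RInt_weighted_sq_le E p a b (V + al) (V + be));
      [lra | intros; apply Err_continuous; auto | auto | auto | exact Hcrit_out |].
    intros x Hx. split; [apply Err_ge_lower | apply Err_le_upper]; auto. }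
  apply Rmult_le_compat_r; auto.
  replace ((V + al) * (V + be)) with (V ^ 2 + V * (al + be) + al * be) by ring.
  rewrite Hprod. pose proof (Rmult_le_compat_l V _ _ H Hsum). nra.
Qed.

End CriticalPoint.

(** If [E a > V] and [E b < -V], every neuron that starts in [(a - 1/w_i, b)]
    ends inside [[a, b]] (it cannot escape by [psi_limit_*] nor straddle an
    end point by [no_straddle_*]); together they lift [N] by more than
    [f b - f a + 4 V] across [[a, b]], which is impossible. *)
Lemma Err_ends_dichotomy (a b : R) (h : nat) (v w : nat -> R) (f p : R -> R)
  (Theta : R -> nat -> R) (vartheta : nat -> R) :
  a < b ->
  (forall i, (1 <= i <= h)%nat -> 0 < v i /\ 0 < w i) ->
  (forall x, continuous f x) -> (forall x, continuous p x) -> (forall x, 0 <= p x) ->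
  (forall x, 0 < p x <-> a < x < b) -> (forall x y, x <= y -> f x <= f y) ->
  Rbar_lt (Lip f a b) (Finite (min_vw h v w)) ->
  (forall j, (1 <= j <= S h)%nat -> forall t, 0 <= t ->
     filterlim (fun s => Theta s j) (within (fun s => 0 <= s) (locally t)) (locally (Theta t j))) ->
  (forall t, 0 <= t -> forall j, (1 <= j <= S h)%nat ->
     Theta t j = Theta 0 j - RInt (fun s => gradLoss a b h v w f p (Theta s) j) 0 t) ->
  is_lim (fun t => dist_h h (Theta t) vartheta) p_infty 0 ->
  (forall i, (1 <= i <= h)%nat -> RInt (fun x => Err h v w f vartheta x * p x)
     (win_lo a b w vartheta i) (win_hi a b w vartheta i) = 0) ->
  sum1 h (fun i => v i * ind_open (a - / w i) b (psi w (Theta 0) i))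
    > f b - f a + 4 * Vsup a b h v w vartheta ->
  Err h v w f vartheta a <= Vsup a b h v w vartheta \/
  - Vsup a b h v w vartheta <= Err h v w f vartheta b.
Proof.
  intros Hab Hvw Hf Hpc Hp0 Hpos Hmono HLip HTc HI Hlim Hwin Hinit.
  pose proof (Vsup_nonneg a b h v w Hvw vartheta Hab). set (V := Vsup a b h v w vartheta) in *.
  apply NNPP. intros Hno. apply not_or_and in Hno as [Ha Hb]. apply Rnot_le_lt in Ha, Hb.
  assert (Hrise : f b - f a + 4 * V < NN h v w vartheta b - NN h v w vartheta a).
  { eapply Rlt_le_trans; [apply Hinit|]. apply NN_rise_ge_count; auto; [lra|].
    intros i Hi [H0a H0b]. destruct (Hvw i Hi) as [_ Hw].
    pose proof (psi_limit_gt_left a b h v w f p Theta Hab Hvw Hf Hpc Hp0 HTc HI vartheta Hlim i Hi H0a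
                  ltac:(lra)).
    pose proof (psi_limit_lt_right a b h v w f p Theta Hab Hvw Hf Hpc Hp0 HTc HI vartheta Hlim i Hi H0b
                  ltac:(lra)).
    pose proof (no_straddle_left a b h v w f p vartheta Hab Hvw Hf Hpc Hpos Hmono HLip Hwin i Hi Ha).
    pose proof (no_straddle_right a b h v w f p vartheta Hab Hvw Hf Hpc Hpos Hmono HLip Hwin i Hi Hb).
    split; apply Rnot_lt_le; intros; tauto || lra. }
  pose proof (Hmono a b ltac:(lra)). unfold Err in Ha, Hb. lra.
Qed.

Theorem theorem2p27
  (a b : R) (h : nat) (v w : nat -> R) (f p : R -> R)
  (Theta : R -> nat -> R) (vartheta : nat -> R) :
  a < b ->
  (1 <= h)%nat ->
  (forall i, (1 <= i <= h)%nat -> 0 < v i /\ 0 < w i) ->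
  (forall x, continuous f x) ->
  (forall x, continuous p x) ->
  (forall x, 0 <= p x) ->
  (forall x, 0 < p x <-> a < x < b) ->
  (forall x y, x <= y -> f x <= f y) ->
  Rbar_lt (Lip f a b) (Finite (min_vw h v w)) ->
  (forall j, (1 <= j <= S h)%nat -> forall t, 0 <= t ->
     filterlim (fun s => Theta s j) (within (fun s => 0 <= s) (locally t))
               (locally (Theta t j))) ->
  (forall t, 0 <= t -> forall j, (1 <= j <= S h)%nat ->
     Theta t j = Theta 0 j
       - RInt (fun s => gradLoss a b h v w f p (Theta s) j) 0 t) ->
  is_lim (fun t => dist_h h (Theta t) vartheta) p_infty 0 ->
  Vsup a b h v w vartheta
    < / (RInt p a b)
      * Rmin (RInt (fun x => (f b - f x) * p x) a b)
             (RInt (fun x => (f x - f a) * p x) a b) ->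
  sum1 h (fun i => v i * ind_open (a - / (w i)) b (psi w (Theta 0) i))
    > f b - f a + 4 * Vsup a b h v w vartheta ->
  Loss a b h v w f p vartheta
    <= (2 * (Vsup a b h v w vartheta) ^ 2
        + (f b - f a) * Vsup a b h v w vartheta) * RInt p a b.
Proof.
  intros Hab _ Hvw Hf Hpc Hp0 Hpos Hmono HLip HTc HI Hlim _ Hinit.
  assert (Hcrit : forall j, (1 <= j <= S h)%nat -> grad_explicit a b h v w f p vartheta j = 0)
    by (intros; eapply flow_limit_critical; eauto).
  assert (Hout : RInt (fun x => Err h v w f vartheta x * p x) a b = 0).
  { pose proof (Hcrit (S h) ltac:(lia)) as Hc. unfold grad_explicit in Hc.
    rewrite Nat.eqb_refl in Hc. lra. }
  assert (Hwin : forall i, (1 <= i <= h)%nat ->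
            RInt (fun x => Err h v w f vartheta x * p x)
                 (win_lo a b w vartheta i) (win_hi a b w vartheta i) = 0).
  { intros i Hi. pose proof (Hcrit i ltac:(lia)) as Hc. unfold grad_explicit in Hc.
    destruct (Nat.eqb_spec i (S h)); [lia|]. destruct (Hvw i Hi). nra. }
  apply Loss_le_of_end_bound; auto.
  eapply Err_ends_dichotomy; eauto.
Qed.
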